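(* Let $\omega_1,\dots,\omega_4\in S\oplus V$ be linearly independent over $\mathbb{R}$, $L=\{\sum_{\alpha=1}^42k_\alpha\omega_\alpha:k\in\mathbb{Z}^4\}$, $\{w_p\}_{p\ge1}$ an enumeration of $L\setminus\{0\}$, and $$\zeta_4(x)=x^{-1}+\sum_{p=1}^\infty\Big\{(x-w_p)^{-1}+\sum_{\mu=0}^{3}(w_p^{-1}x)^\mu w_p^{-1}\Big\},\quad x\in(S\oplus V)\setminus L.$$ Let $\mathcal{P}_0=\partial^3\zeta_4/\partial x_0^3$ and $D_0=\partial/\partial x_0$. Then $D_0\mathcal{P}_0$ vanishes at each of the $15$ points $\sum_{\alpha=1}^4\varepsilon_\alpha\omega_\alpha$ with $\varepsilon\in\{0,1\}^4\setminus\{(0,0,0,0)\}$.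
   Context: $\mathbb{R}_{0,3}$ is the real Clifford algebra generated by $e_1,e_2,e_3$ with $e_ie_j+e_je_i=-2\delta_{ij}$; $e_0=1$. $S\oplus V$ is the set of paravectors $x=x_0+\sum_{j=1}^3x_je_j$, identified with $\mathbb{R}^4$; for $x\neq0$, $x^{-1}=\bar x/|x|^2$ with $\bar x=x_0-\sum_jx_je_j$. *)

From Stdlib Require Import Reals ZArith Arith.
From Coquelicot Require Import Coquelicot.
Open Scope R_scope.

Fixpoint rsum (f : nat -> R) (n : nat) : R :=
  match n with O => 0 | S m => rsum f m + f m end.

(* ---------- The Clifford algebra R_{0,3} ----------
   An element is given by its 8 real coordinates on the basis blades e_A,
   A ⊆ {1,2,3}, encoded as a bitmask A in 0..7: bit k (k=0,1,2) set
   means e_{k+1} occurs.  So index 0 = 1, 1 = e1, 2 = e2, 4 = e3,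
   3 = e1e2, 5 = e1e3, 6 = e2e3, 7 = e1e2e3.  Indices >= 8 are unused (0). *)
Definition Cl := nat -> R.

Definition bit (A i : nat) : nat := if Nat.testbit A i then 1%nat else 0%nat.

Definition swaps (A B : nat) : nat :=
  (bit A 1 * bit B 0 + bit A 2 * bit B 0 + bit A 2 * bit B 1)%nat.

Definition common (A B : nat) : nat :=
  (bit A 0 * bit B 0 + bit A 1 * bit B 1 + bit A 2 * bit B 2)%nat.

(* e_A e_B = blade_sign A B * e_{A xor B}, using e_i e_j = - e_j e_i (i<>j)
   and e_i e_i = -1. *)
Definition blade_sign (A B : nat) : R := (-1) ^ (swaps A B + common A B).

Definition clzero : Cl := fun _ => 0.
Definition clone : Cl := fun A => if (A =? 0)%nat then 1 else 0.
Definition cladd (a b : Cl) : Cl := fun A => a A + b A.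

Definition clmul (a b : Cl) : Cl := fun C =>
  if (C <? 8)%nat then
    rsum (fun A => a A * b (Nat.lxor A C) * blade_sign A (Nat.lxor A C)) 8
  else 0.

Fixpoint clpow (a : Cl) (n : nat) : Cl :=
  match n with O => clone | S m => clmul (clpow a m) a end.

Fixpoint clsum (f : nat -> Cl) (n : nat) : Cl :=
  match n with O => clzero | S m => cladd (clsum f m) (f m) end.

(* ---------- Paravectors S ⊕ V ≅ R^4 ----------
   A paravector x = x0 + x1 e1 + x2 e2 + x3 e3 is given by v : nat -> R,
   only v 0 .. v 3 being relevant. *)
Definition Para := nat -> R.

Definition para (v : Para) : Cl := fun A =>
  if (A =? 0)%nat then v 0%nat
  else if (A =? 1)%nat then v 1%nat
  else if (A =? 2)%nat then v 2%nat
  else if (A =? 4)%nat then v 3%nat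
  else 0.

Definition psub (x y : Para) : Para := fun j => x j - y j.

Definition pnorm2 (v : Para) : R :=
  v 0%nat ^ 2 + v 1%nat ^ 2 + v 2%nat ^ 2 + v 3%nat ^ 2.

(* x^{-1} = conj(x) / |x|^2 *)
Definition pinv (v : Para) : Para := fun j =>
  (if (j =? 0)%nat then v j else - v j) / pnorm2 v.

Definition peq (x y : Para) : Prop := forall j, (j < 4)%nat -> x j = y j.

Definition pzero : Para := fun _ => 0.

Definition lin_indep4 (omega : nat -> Para) : Prop :=
  forall c : nat -> R,
    (forall j, (j < 4)%nat -> rsum (fun a => c a * omega a j) 4 = 0) ->
    forall a, (a < 4)%nat -> c a = 0.

Definition inL (omega : nat -> Para) (y : Para) : Prop :=
  exists k : nat -> Z,
    forall j, (j < 4)%nat -> y j = rsum (fun a => 2 * IZR (k a) * omega a j) 4.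

(* w : nat -> Para enumerates L \ {0}  (w p plays the role of w_{p+1}). *)
Definition enumerates_L0 (omega : nat -> Para) (w : nat -> Para) : Prop :=
  (forall p, inL omega (w p) /\ ~ peq (w p) pzero) /\
  (forall p q, peq (w p) (w q) -> p = q) /\
  (forall y, inL omega y -> ~ peq y pzero -> exists p, peq (w p) y).

Definition zterm (w x : Para) : Cl :=
  cladd (para (pinv (psub x w)))
        (clsum (fun mu => clmul (clpow (clmul (para (pinv w)) (para x)) mu)
                                (para (pinv w))) 4).

Definition zpartial (w : nat -> Para) (x : Para) (N : nat) : Cl :=
  cladd (para (pinv x)) (clsum (fun p => zterm (w p) x) N).

Definition zeta4 (w : nat -> Para) (x : Para) : Cl :=
  fun A => real (Lim_seq (fun N => zpartial w x N A)).

Definition shift0 (x : Para) (t : R) : Para :=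
  fun j => if (j =? 0)%nat then x j + t else x j.

Definition halfper (omega : nat -> Para) (eps : nat -> bool) : Para :=
  fun j => rsum (fun a => if eps a then omega a j else 0) 4.

(* Four x0-derivatives kill the polynomial correction terms of zeta_4, so D0 P0 is the sum
   over v in L of the fourth x0-derivatives of (x - v)^{-1}.  Termwise differentiation is
   legitimate: each summand equals (x - w)^{-1} (x w^{-1})^4, whose x0-derivatives of order
   at most 5 are O(|w|^{-5}) near h = sum eps_a omega_a, and sum |w|^{-5} converges over a
   rank-4 lattice (count lattice points in dyadic boxes).  Finally v |-> 2h - v permutes L
   and turns (h + t - v)^{-1} into -(h - t - v)^{-1}, whose fourth t-derivative at 0 is the
   opposite one, so the absolutely convergent sum cancels in pairs. *)

From Stdlib Require Import Reals ZArith Arith.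
From Coquelicot Require Import Coquelicot.
Open Scope R_scope.
From Stdlib Require Import Lra Lia Setoid Morphisms Bool List FunctionalExtensionality
  IndefiniteDescription Classical_Prop Ranalysis5 PSeries_reg.
From mathcomp Require ssreflect ssrfun ssrbool eqtype ssrnat seq fintype bigop.
From mathcomp Require ssralg matrix mxalgebra Rstruct.

Lemma rsum_ext f g n : (forall i, (i < n)%nat -> f i = g i) -> rsum f n = rsum g n.
Proof. induction n; simpl; intros H. auto. rewrite IHn, H; auto. Qed.

Lemma rsum_le f g n : (forall i, (i < n)%nat -> f i <= g i) -> rsum f n <= rsum g n.
Proof. induction n; simpl; intros H. lra. apply Rplus_le_compat; auto. Qed.

Lemma rsum_nonneg f n : (forall i, (i < n)%nat -> 0 <= f i) -> 0 <= rsum f n.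
Proof. induction n; simpl; intros H. lra. assert (0 <= f n) by auto. assert (0 <= rsum f n) by auto. lra. Qed.

Lemma rsum_ge_term f n i : (i < n)%nat -> (forall j, (j < n)%nat -> 0 <= f j) -> f i <= rsum f n.
Proof.
  induction n; intros Hi H; simpl. lia.
  destruct (Nat.eq_dec i n) as [->|Hne].
  - assert (0 <= rsum f n) by (apply rsum_nonneg; auto). lra.
  - assert (f i <= rsum f n) by (apply IHn; auto; lia). assert (0 <= f n) by auto. lra.
Qed.

Lemma rsum_Rabs f n : Rabs (rsum f n) <= rsum (fun i => Rabs (f i)) n.
Proof. induction n; simpl. rewrite Rabs_R0; lra. eapply Rle_trans. apply Rabs_triang. lra. Qed.

Lemma rsum_plus f g n : rsum (fun i => f i + g i) n = rsum f n + rsum g n.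
Proof. induction n; simpl. lra. rewrite IHn; ring. Qed.

Lemma rsum_scal c f n : rsum (fun i => c * f i) n = c * rsum f n.
Proof. induction n; simpl. ring. rewrite IHn; ring. Qed.

Lemma rsum_swap (f : nat -> nat -> R) n m :
  rsum (fun i => rsum (fun j => f i j) m) n = rsum (fun j => rsum (fun i => f i j) n) m.
Proof.
  induction n; simpl.
  - induction m; simpl; lra.
  - rewrite IHn, <- rsum_plus. reflexivity.
Qed.

Lemma rsum_sum_f_R0 a n : rsum a (S n) = sum_f_R0 a n.
Proof. induction n; simpl in *. ring. rewrite <- IHn. reflexivity. Qed.

Module DualBasis.
Import ssreflect ssrfun ssrbool eqtype ssrnat seq fintype bigop.
Import ssralg matrix mxalgebra Rstruct.
Import GRing.Theory.

Section BigSum.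
Local Open Scope ring_scope.
Lemma rsum_big (f : nat -> R) n : rsum f n = \sum_(i < n) f i.
Proof. by elim: n => [|n IH]; rewrite ?big_ord0 // big_ord_recr -IH. Qed.
End BigSum.

Lemma lin_indep_dual n (omega : nat -> nat -> R) :
  (forall c : nat -> R, (forall j, (j < n)%coq_nat -> rsum (fun a => c a * omega a j) n = 0) ->
     forall a, (a < n)%coq_nat -> c a = 0) ->
  exists N : nat -> nat -> R, forall (v : nat -> R) a, (a < n)%coq_nat ->
    v a = rsum (fun j => rsum (fun i => v i * omega i j) n * N j a) n.
Proof.
  Local Open Scope ring_scope.
  case: n => [|n] indep; first by exists (fun _ _ => 0) => v a /ltP.
  pose M : 'M[R]_n.+1 := \matrix_(i, j) omega i j.
  have unitM : M \in unitmx.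
    rewrite -row_free_unit; apply/inj_row_free => u uM0; apply/rowP => i.
    rewrite mxE -[i]inord_val; apply: (indep (fun a => u ord0 (inord a))); last exact/ltP.
    move=> j /ltP lt_jn; have := congr1 (fun m : 'rV_n.+1 => m ord0 (inord j)) uM0.
    rewrite !mxE rsum_big => uM0j; apply: etrans _ uM0j.
    by apply: eq_bigr => a _; rewrite /M mxE inord_val inordK.
  exists (fun j a => invmx M (inord j) (inord a)) => v a /ltP lt_an.
  rewrite rsum_big; transitivity (((\row_i v i) *m M *m invmx M) ord0 (inord a)).
    by rewrite mulmxK // mxE inordK.
  rewrite mxE; apply: eq_bigr => j _; rewrite mxE rsum_big inord_val; congr (_ * _).
  by apply: eq_bigr => i _; rewrite !mxE.
Qed.
End DualBasis.

Definition pmax (y : Para) : R :=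
  Rmax (Rmax (Rabs (y 0%nat)) (Rabs (y 1%nat))) (Rmax (Rabs (y 2%nat)) (Rabs (y 3%nat))).

Lemma pmax_coord y j : (j < 4)%nat -> Rabs (y j) <= pmax y.
Proof. intros Hj; unfold pmax, Rmax; destruct j as [|[|[|[|]]]]; try lia; repeat destruct Rle_dec; lra. Qed.

Lemma pmax_ge0 y : 0 <= pmax y.
Proof. eapply Rle_trans; [apply (Rabs_pos (y 0%nat)) | apply pmax_coord; lia]. Qed.

Lemma pmax_le y B : (forall j, (j < 4)%nat -> Rabs (y j) <= B) -> pmax y <= B.
Proof. intros H; unfold pmax; repeat apply Rmax_lub; apply H; lia. Qed.

Lemma pmax_peq y y' : peq y y' -> pmax y = pmax y'.
Proof. intros H; unfold pmax; rewrite !H by lia; reflexivity. Qed.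

Lemma pmax_sq_le y : pmax y * pmax y <= pnorm2 y.
Proof.
  assert (Hsq : forall x, x ^ 2 = Rabs x * Rabs x)
    by (intros x; rewrite <- Rabs_mult, Rabs_right; [ring | nra]).
  unfold pmax, pnorm2, Rmax; rewrite !Hsq.
  assert (H0 := Rabs_pos (y 0%nat)); assert (H1 := Rabs_pos (y 1%nat));
  assert (H2 := Rabs_pos (y 2%nat)); assert (H3 := Rabs_pos (y 3%nat)).
  repeat destruct Rle_dec; nra.
Qed.

Lemma pnorm2_neq0 y : 0 < pmax y -> pnorm2 y <> 0.
Proof. intros H; assert (G := pmax_sq_le y); nra. Qed.

Lemma pmax_shift0 y t : pmax (shift0 y t) <= pmax y + Rabs t.
Proof.
  apply pmax_le; intros j Hj.
  assert (G := pmax_coord y j Hj); assert (Ht := Rabs_pos t).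
  unfold shift0; destruct (j =? 0)%nat.
  - eapply Rle_trans; [apply Rabs_triang | lra].
  - lra.
Qed.

Lemma pmax_le_shift0 y t : pmax y <= pmax (shift0 y t) + Rabs t.
Proof.
  rewrite <- Rabs_Ropp, <- (pmax_peq (shift0 (shift0 y t) (- t))) at 1.
  - apply pmax_shift0.
  - intros j _; unfold shift0; destruct (j =? 0)%nat; ring.
Qed.

Lemma psub_shift0 x v t : psub (shift0 x t) v = shift0 (psub x v) t.
Proof. apply functional_extensionality; intros j; unfold psub, shift0; destruct (j =? 0)%nat; ring. Qed.

Lemma psub_pzero y : psub y pzero = y.
Proof. apply functional_extensionality; intros j; unfold psub, pzero; ring. Qed.

Definition comb (omega : nat -> Para) (v : nat -> R) : Para :=
  fun j => rsum (fun i => v i * omega i j) 4.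

Lemma lin_indep4_coord_bound omega : lin_indep4 omega -> exists K, 0 < K /\
  forall v a, (a < 4)%nat -> Rabs (v a) <= K * pmax (comb omega v).
Proof.
  intros Hli; destruct (DualBasis.lin_indep_dual 4 omega Hli) as [N HN].
  set (S := rsum (fun a => rsum (fun j => Rabs (N j a)) 4) 4).
  assert (HS : 0 <= S) by (apply rsum_nonneg; intros; apply rsum_nonneg; intros; apply Rabs_pos).
  exists (1 + S); split; [lra |]; intros v a Ha.
  assert (Hy := pmax_ge0 (comb omega v)).
  assert (HNa : rsum (fun j => Rabs (N j a)) 4 <= S)
    by (apply (rsum_ge_term (fun a => rsum (fun j => Rabs (N j a)) 4)); auto;
        intros; apply rsum_nonneg; intros; apply Rabs_pos).
  rewrite (HN v a Ha); eapply Rle_trans; [apply rsum_Rabs |].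
  apply Rle_trans with (rsum (fun j => pmax (comb omega v) * Rabs (N j a)) 4).
  - apply rsum_le; intros j Hj; rewrite Rabs_mult.
    apply Rmult_le_compat_r; [apply Rabs_pos | apply (pmax_coord (comb omega v)); auto].
  - rewrite rsum_scal; nra.
Qed.

Ltac reduce_lxor :=
  repeat match goal with
  | |- context [Nat.lxor ?x ?y] =>
      let v := eval vm_compute in (Nat.lxor x y) in change (Nat.lxor x y) with v
  end.

Ltac unfold_clmul := unfold clmul, blade_sign, swaps, common, bit; simpl; reduce_lxor.

Lemma clmul_coord0 (a b : Cl) : clmul a b 0%nat =
  a 0%nat * b 0%nat - a 1%nat * b 1%nat - a 2%nat * b 2%nat - a 3%nat * b 3%nat
  - a 4%nat * b 4%nat - a 5%nat * b 5%nat - a 6%nat * b 6%nat + a 7%nat * b 7%nat.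
Proof. unfold_clmul; ring. Qed.
Lemma clmul_coord1 (a b : Cl) : clmul a b 1%nat =
  a 0%nat * b 1%nat + a 1%nat * b 0%nat + a 2%nat * b 3%nat - a 3%nat * b 2%nat
  + a 4%nat * b 5%nat - a 5%nat * b 4%nat - a 6%nat * b 7%nat - a 7%nat * b 6%nat.
Proof. unfold_clmul; ring. Qed.
Lemma clmul_coord2 (a b : Cl) : clmul a b 2%nat =
  a 0%nat * b 2%nat - a 1%nat * b 3%nat + a 2%nat * b 0%nat + a 3%nat * b 1%nat
  + a 4%nat * b 6%nat + a 5%nat * b 7%nat - a 6%nat * b 4%nat + a 7%nat * b 5%nat.
Proof. unfold_clmul; ring. Qed.
Lemma clmul_coord3 (a b : Cl) : clmul a b 3%nat =
  a 0%nat * b 3%nat + a 1%nat * b 2%nat - a 2%nat * b 1%nat + a 3%nat * b 0%nat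
  - a 4%nat * b 7%nat + a 5%nat * b 6%nat - a 6%nat * b 5%nat - a 7%nat * b 4%nat.
Proof. unfold_clmul; ring. Qed.
Lemma clmul_coord4 (a b : Cl) : clmul a b 4%nat =
  a 0%nat * b 4%nat - a 1%nat * b 5%nat - a 2%nat * b 6%nat - a 3%nat * b 7%nat
  + a 4%nat * b 0%nat + a 5%nat * b 1%nat + a 6%nat * b 2%nat - a 7%nat * b 3%nat.
Proof. unfold_clmul; ring. Qed.
Lemma clmul_coord5 (a b : Cl) : clmul a b 5%nat =
  a 0%nat * b 5%nat + a 1%nat * b 4%nat + a 2%nat * b 7%nat - a 3%nat * b 6%nat
  - a 4%nat * b 1%nat + a 5%nat * b 0%nat + a 6%nat * b 3%nat + a 7%nat * b 2%nat.
Proof. unfold_clmul; ring. Qed.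
Lemma clmul_coord6 (a b : Cl) : clmul a b 6%nat =
  a 0%nat * b 6%nat - a 1%nat * b 7%nat + a 2%nat * b 4%nat + a 3%nat * b 5%nat
  - a 4%nat * b 2%nat - a 5%nat * b 3%nat + a 6%nat * b 0%nat - a 7%nat * b 1%nat.
Proof. unfold_clmul; ring. Qed.
Lemma clmul_coord7 (a b : Cl) : clmul a b 7%nat =
  a 0%nat * b 7%nat + a 1%nat * b 6%nat - a 2%nat * b 5%nat + a 3%nat * b 4%nat
  + a 4%nat * b 3%nat - a 5%nat * b 2%nat + a 6%nat * b 1%nat + a 7%nat * b 0%nat.
Proof. unfold_clmul; ring. Qed.

Ltac expand_clmul :=
  repeat rewrite ?clmul_coord0, ?clmul_coord1, ?clmul_coord2, ?clmul_coord3,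
                 ?clmul_coord4, ?clmul_coord5, ?clmul_coord6, ?clmul_coord7.

Ltac by_coords tac :=
  let C := fresh "C" in let HC := fresh "HC" in
  intros C HC; do 8 (destruct C as [|C]; [tac |]); lia.

Definition ceq (a b : Cl) : Prop := forall A, (A < 8)%nat -> a A = b A.
Definition clopp (a : Cl) : Cl := fun A => - a A.
Definition clsub (a b : Cl) : Cl := cladd a (clopp b).

Lemma ceq_refl a : ceq a a. Proof. intros A _; reflexivity. Qed.
Lemma ceq_sym a b : ceq a b -> ceq b a. Proof. intros H A HA; rewrite H; auto. Qed.
Lemma ceq_trans a b c : ceq a b -> ceq b c -> ceq a c.
Proof. intros H1 H2 A HA; rewrite H1, H2; auto. Qed.

Add Parametric Relation : Cl ceq
  reflexivity proved by ceq_refl symmetry proved by ceq_sym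
  transitivity proved by ceq_trans as ceq_rel.

Add Parametric Morphism : cladd with signature ceq ==> ceq ==> ceq as cladd_mor.
Proof. intros a a' Ha b b' Hb A HA; unfold cladd; rewrite Ha, Hb; auto. Qed.
Add Parametric Morphism : clopp with signature ceq ==> ceq as clopp_mor.
Proof. intros a a' Ha A HA; unfold clopp; rewrite Ha; auto. Qed.
Add Parametric Morphism : clsub with signature ceq ==> ceq ==> ceq as clsub_mor.
Proof. intros a a' Ha b b' Hb; unfold clsub; rewrite Ha, Hb; reflexivity. Qed.
Add Parametric Morphism : clmul with signature ceq ==> ceq ==> ceq as clmul_mor.
Proof.
  intros a a' Ha b b' Hb.
  assert (Ea : forall A, (A < 8)%nat -> a A = a' A) by exact Ha.
  assert (Eb : forall A, (A < 8)%nat -> b A = b' A) by exact Hb.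
  by_coords ltac:(expand_clmul; rewrite !Ea, !Eb by lia; reflexivity).
Qed.
Add Parametric Morphism n : (fun a => clpow a n) with signature ceq ==> ceq as clpow_mor.
Proof. intros a a' Ha; induction n; simpl. reflexivity. rewrite IHn, Ha; reflexivity. Qed.

Lemma clsum_ext f g n : (forall m, (m < n)%nat -> ceq (f m) (g m)) -> ceq (clsum f n) (clsum g n).
Proof.
  induction n; intros H; simpl. reflexivity.
  assert (IH : ceq (clsum f n) (clsum g n)) by (apply IHn; intros; apply H; lia).
  rewrite IH, (H n) by lia; reflexivity.
Qed.

Lemma clsum_coord (f : nat -> Cl) N A : clsum f N A = rsum (fun p => f p A) N.
Proof. induction N; simpl; [reflexivity | unfold cladd; rewrite IHN; reflexivity]. Qed.

Lemma clmulA a b c : ceq (clmul (clmul a b) c) (clmul a (clmul b c)).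
Proof. by_coords ltac:(expand_clmul; ring). Qed.
Lemma clmulDr a b c : ceq (clmul a (cladd b c)) (cladd (clmul a b) (clmul a c)).
Proof. by_coords ltac:(unfold cladd; expand_clmul; ring). Qed.
Lemma clmulDl a b c : ceq (clmul (cladd a b) c) (cladd (clmul a c) (clmul b c)).
Proof. by_coords ltac:(unfold cladd; expand_clmul; ring). Qed.
Lemma clmulNl a b : ceq (clmul (clopp a) b) (clopp (clmul a b)).
Proof. by_coords ltac:(unfold clopp; expand_clmul; ring). Qed.
Lemma clmul1l a : ceq (clmul clone a) a.
Proof. by_coords ltac:(expand_clmul; unfold clone; simpl; ring). Qed.
Lemma clmul1r a : ceq (clmul a clone) a.
Proof. by_coords ltac:(expand_clmul; unfold clone; simpl; ring). Qed.
Lemma clmul0l a : ceq (clmul clzero a) clzero.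
Proof. by_coords ltac:(expand_clmul; unfold clzero; ring). Qed.
Lemma clmul0r a : ceq (clmul a clzero) clzero.
Proof. by_coords ltac:(expand_clmul; unfold clzero; ring). Qed.

Lemma clmul_sumr a f n : ceq (clmul a (clsum f n)) (clsum (fun m => clmul a (f m)) n).
Proof. induction n; simpl. apply clmul0r. rewrite clmulDr, IHn; reflexivity. Qed.

Lemma clmul_pow_swap P Q m : ceq (clmul P (clpow (clmul Q P) m)) (clmul (clpow (clmul P Q) m) P).
Proof.
  induction m; simpl.
  - rewrite clmul1l, clmul1r; reflexivity.
  - rewrite <- clmulA, IHm, !clmulA; reflexivity.
Qed.

Lemma para_psub x w : ceq (para (psub x w)) (clsub (para x) (para w)).
Proof. by_coords ltac:(unfold para, psub, clsub, cladd, clopp; simpl; ring). Qed.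

Lemma para_mul_pinv y : pnorm2 y <> 0 -> ceq (clmul (para y) (para (pinv y))) clone.
Proof.
  intros Hy. by_coords ltac:(expand_clmul; unfold para, pinv, clone; simpl; unfold pnorm2 in *; field; auto).
Qed.
Lemma para_pinv_mul y : pnorm2 y <> 0 -> ceq (clmul (para (pinv y)) (para y)) clone.
Proof.
  intros Hy. by_coords ltac:(expand_clmul; unfold para, pinv, clone; simpl; unfold pnorm2 in *; field; auto).
Qed.

(* (x - w) * sum_{mu<4} (w^{-1} x)^mu w^{-1} telescopes to (x w^{-1})^4 - 1. *)
Lemma zterm_closed_form w x : pnorm2 w <> 0 -> pnorm2 (psub x w) <> 0 ->
  ceq (zterm w x) (clmul (para (pinv (psub x w))) (clpow (clmul (para x) (para (pinv w))) 4)).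
Proof.
  intros Hw Hxw; unfold zterm.
  assert (HY : ceq (clmul (clsub (para x) (para w)) (para (pinv (psub x w)))) clone)
    by (rewrite <- para_psub; apply para_mul_pinv; auto).
  assert (HYl : ceq (clmul (para (pinv (psub x w))) (clsub (para x) (para w))) clone)
    by (rewrite <- para_psub; apply para_pinv_mul; auto).
  assert (HWU : ceq (clmul (para w) (para (pinv w))) clone) by (apply para_mul_pinv; auto).
  set (X := para x) in *; set (W := para w) in *; set (U := para (pinv w)) in *.
  set (Y := para (pinv (psub x w))) in *; set (z := clmul X U).
  assert (step : forall m, ceq (clmul (clsub X W) (clmul (clpow (clmul U X) m) U))
                              (clsub (clpow z (S m)) (clpow z m))).
  { intros m; unfold clsub; rewrite clmulDl, clmulNl.
    rewrite <- (clmulA X), (clmul_pow_swap X U m), clmulA.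
    rewrite <- (clmul_pow_swap U X m), <- (clmulA W U), HWU, clmul1l; reflexivity. }
  assert (telescope : ceq (clmul (clsub X W) (cladd Y (clsum (fun mu => clmul (clpow (clmul U X) mu) U) 4)))
                          (clpow z 4)).
  { rewrite clmulDr, HY, clmul_sumr, (clsum_ext _ _ 4 (fun m _ => step m)).
    simpl clsum; intros C HC; unfold clsub, cladd, clopp, clzero; simpl; ring. }
  rewrite <- (clmul1l (cladd Y _)), <- HYl, clmulA, telescope; reflexivity.
Qed.

Definition cnorm (a : Cl) : R := rsum (fun A => Rabs (a A)) 8.

Add Parametric Morphism : cnorm with signature ceq ==> eq as cnorm_mor.
Proof. intros a b H; unfold cnorm; apply rsum_ext; intros; rewrite H; auto. Qed.

Lemma cnorm_ge0 a : 0 <= cnorm a.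
Proof. apply rsum_nonneg; intros; apply Rabs_pos. Qed.

Lemma cnorm_coord a A : (A < 8)%nat -> Rabs (a A) <= cnorm a.
Proof. intros; apply (rsum_ge_term (fun A => Rabs (a A))); auto; intros; apply Rabs_pos. Qed.

Lemma cnorm_zero : cnorm clzero = 0.
Proof. unfold cnorm, clzero; simpl; rewrite Rabs_R0; ring. Qed.

Lemma cnorm_one : cnorm clone = 1.
Proof. unfold cnorm, clone; simpl; rewrite Rabs_R0, Rabs_R1; ring. Qed.

Lemma cnorm_add a b : cnorm (cladd a b) <= cnorm a + cnorm b.
Proof. unfold cnorm, cladd; rewrite <- rsum_plus; apply rsum_le; intros; apply Rabs_triang. Qed.

Lemma cnorm_opp a : cnorm (clopp a) = cnorm a.
Proof. unfold cnorm, clopp; apply rsum_ext; intros; apply Rabs_Ropp. Qed.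

Lemma cnorm_mul a b : cnorm (clmul a b) <= cnorm a * cnorm b.
Proof.
  unfold cnorm.
  apply Rle_trans with (rsum (fun C => rsum (fun A => Rabs (a A) * Rabs (b (Nat.lxor A C))) 8) 8).
  - apply rsum_le; intros C HC; unfold clmul.
    replace (C <? 8)%nat with true by (symmetry; apply Nat.ltb_lt; auto).
    eapply Rle_trans; [apply rsum_Rabs | apply rsum_le]; intros A HA.
    rewrite !Rabs_mult; unfold blade_sign; rewrite pow_1_abs; lra.
  - (* C |-> A xor C permutes 0..7, so the double sum is cnorm a * cnorm b. *)
    simpl; reduce_lxor; lra.
Qed.

Lemma cnorm_para y : cnorm (para y) <= 4 * pmax y.
Proof.
  unfold cnorm, para; simpl; rewrite !Rabs_R0.
  assert (H0 := pmax_coord y 0 ltac:(lia)); assert (H1 := pmax_coord y 1 ltac:(lia));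
  assert (H2 := pmax_coord y 2 ltac:(lia)); assert (H3 := pmax_coord y 3 ltac:(lia)); lra.
Qed.

Lemma cnorm_para_pinv y : 0 < pmax y -> cnorm (para (pinv y)) <= 4 / pmax y.
Proof.
  intros Hp; assert (Hs := pmax_sq_le y).
  assert (Hn : 0 < pnorm2 y) by nra.
  assert (Hn' : 0 < / pnorm2 y) by (apply Rinv_0_lt_compat; auto).
  unfold cnorm, para, pinv; simpl; rewrite !Rabs_R0.
  unfold Rdiv; rewrite !Rabs_mult, !Rabs_Ropp, (Rabs_right (/ pnorm2 y)) by lra.
  assert (H0 := pmax_coord y 0 ltac:(lia)); assert (H1 := pmax_coord y 1 ltac:(lia));
  assert (H2 := pmax_coord y 2 ltac:(lia)); assert (H3 := pmax_coord y 3 ltac:(lia)).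
  apply Rle_trans with (4 * pmax y * / (pmax y * pmax y)).
  - apply Rle_trans with (4 * pmax y * / pnorm2 y); [nra |].
    apply Rmult_le_compat_l; [lra | apply Rinv_le_contravar; nra].
  - right; field; lra.
Qed.

Lemma ball_locally r t : Rabs t < r -> locally t (fun s => Rabs s < r).
Proof.
  intros Ht; assert (He : 0 < r - Rabs t) by lra.
  exists (mkposreal _ He); intros s Hs; simpl in Hs.
  unfold ball in Hs; simpl in Hs; unfold AbsRing_ball, abs, minus, plus, opp in Hs; simpl in Hs.
  assert (Rabs s <= Rabs t + Rabs (s - t))
    by (replace s with (t + (s - t)) at 1 by ring; apply Rabs_triang).
  unfold Rminus in *; lra.
Qed.

Lemma locally_ball0 r (P : R -> Prop) : 0 < r -> (forall t, Rabs t < r -> P t) -> locally 0 P.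
Proof.
  intros Hr H; eapply filter_imp; [intros t Ht; apply H, Ht |].
  apply ball_locally; rewrite Rabs_R0; auto.
Qed.

Lemma is_derive_rsum (f : nat -> R -> R) (df : nat -> R) n t :
  (forall i, (i < n)%nat -> is_derive (f i) t (df i)) ->
  is_derive (fun s => rsum (fun i => f i s) n) t (rsum df n).
Proof.
  induction n; intros H; simpl.
  - apply (is_derive_const 0).
  - apply (is_derive_plus (fun s => rsum (fun i => f i s) n) (f n)); auto.
Qed.

Definition is_derive_cl (F F' : R -> Cl) (t : R) : Prop :=
  forall A, (A < 8)%nat -> is_derive (fun s => F s A) t (F' t A).

Lemma is_derive_cl_const K t : is_derive_cl (fun _ => K) (fun _ => clzero) t.
Proof. intros A _; apply (is_derive_const (K A)). Qed.

Lemma is_derive_cl_add F F' G G' t : is_derive_cl F F' t -> is_derive_cl G G' t ->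
  is_derive_cl (fun s => cladd (F s) (G s)) (fun s => cladd (F' s) (G' s)) t.
Proof. intros HF HG A HA; apply (is_derive_plus (fun s => F s A) (fun s => G s A)); auto. Qed.

Lemma is_derive_cl_opp F F' t : is_derive_cl F F' t ->
  is_derive_cl (fun s => clopp (F s)) (fun s => clopp (F' s)) t.
Proof. intros HF A HA; apply (is_derive_opp (fun s => F s A)); auto. Qed.

Lemma lxor_lt8 A C : (A < 8)%nat -> (C < 8)%nat -> (Nat.lxor A C < 8)%nat.
Proof.
  intros HA HC.
  do 8 (destruct A as [|A]; [do 8 (destruct C as [|C]; [vm_compute; lia |]); lia |]); lia.
Qed.

Lemma is_derive_cl_mul F F' G G' t : is_derive_cl F F' t -> is_derive_cl G G' t ->
  is_derive_cl (fun s => clmul (F s) (G s))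
               (fun s => cladd (clmul (F' s) (G s)) (clmul (F s) (G' s))) t.
Proof.
  intros HF HG C HC; unfold clmul, cladd.
  replace (C <? 8)%nat with true by (symmetry; apply Nat.ltb_lt; auto).
  rewrite <- rsum_plus; apply is_derive_rsum; intros A HA.
  set (B := Nat.lxor A C); assert (HB : (B < 8)%nat) by (apply lxor_lt8; auto).
  set (sg := blade_sign A B).
  apply (is_derive_ext (fun s => sg * (F s A * G s B))); [intros; apply Rmult_comm |].
  replace (F' t A * G t B * sg + F t A * G' t B * sg) with (sg * (F' t A * G t B + F t A * G' t B))
    by ring.
  apply is_derive_scal.
  apply (is_derive_mult (fun s => F s A) (fun s => G s B)); auto; intros; apply Rmult_comm.
Qed.

Lemma is_derive_cl_ceq F F1 F2 t : is_derive_cl F F1 t -> ceq (F1 t) (F2 t) -> is_derive_cl F F2 t.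
Proof. intros H E A HA; rewrite <- E by auto; auto. Qed.

Lemma is_derive_cl_ext_loc F G F' t :
  locally t (fun s => ceq (F s) (G s)) -> is_derive_cl F F' t -> is_derive_cl G F' t.
Proof.
  intros Hl H A HA; apply (is_derive_ext_loc (fun s => F s A)); auto.
  eapply filter_imp; [| exact Hl]; intros s Hs; simpl; auto.
Qed.

Definition deriv_chain (r : R) (n : nat) (D : nat -> R -> Cl) : Prop :=
  forall j t, (j < n)%nat -> Rabs t < r -> is_derive_cl (D j) (D (S j)) t.

Section DerivativeBounds.
Variables r lam : R.
Hypothesis r_gt0 : 0 < r.
Hypothesis lam_ge0 : 0 <= lam.

Fixpoint bounded_derivs (n : nat) (M : R) (F : R -> Cl) {struct n} : Prop :=
  (forall t, Rabs t < r -> cnorm (F t) <= M) /\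
  match n with
  | O => True
  | S n' => exists F', (forall t, Rabs t < r -> is_derive_cl F F' t) /\ bounded_derivs n' (M * lam) F'
  end.

Lemma bounded_derivs_ge0 n M F : bounded_derivs n M F -> 0 <= M.
Proof.
  intros H; apply (Rle_trans _ (cnorm (F 0))); [apply cnorm_ge0 |].
  destruct n; apply (proj1 H); rewrite Rabs_R0; auto.
Qed.

Lemma bounded_derivs_le n : forall M M' F, M <= M' -> bounded_derivs n M F -> bounded_derivs n M' F.
Proof.
  induction n; intros M M' F HM [HF HF']; split;
    try (intros t Ht; specialize (HF t Ht); lra); auto.
  destruct HF' as [F' [HD HS]]; exists F'; split; auto.
  apply (IHn (M * lam)); auto; apply Rmult_le_compat_r; auto.
Qed.

Lemma bounded_derivs_pred n M F : bounded_derivs (S n) M F -> bounded_derivs n M F.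
Proof.
  revert M F; induction n; intros M F [HF [F' [HD HS]]]; split; auto.
  exists F'; split; auto.
Qed.

Lemma bounded_derivs_ext n M F G :
  (forall t, Rabs t < r -> ceq (F t) (G t)) -> bounded_derivs n M F -> bounded_derivs n M G.
Proof.
  intros HE HS; destruct n; destruct HS as [HF HF'];
    (split; [intros t Ht; rewrite <- (HE t Ht); auto |]); auto.
  destruct HF' as [F' [HD HS]]; exists F'; split; auto.
  intros t Ht; apply (is_derive_cl_ext_loc F); auto.
  eapply filter_imp; [| apply (ball_locally r t Ht)]; auto.
Qed.

Lemma bounded_derivs_zero n : forall M, 0 <= M -> bounded_derivs n M (fun _ => clzero).
Proof.
  induction n; intros M HM; split; try (intros; rewrite cnorm_zero; auto); auto.
  exists (fun _ => clzero); split; [intros; apply is_derive_cl_const |].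
  apply IHn, Rmult_le_pos; auto.
Qed.

Lemma bounded_derivs_const n M K : cnorm K <= M -> bounded_derivs n M (fun _ => K).
Proof.
  intros HK; assert (0 <= M) by (eapply Rle_trans; [apply cnorm_ge0 | eauto]).
  destruct n; split; auto.
  exists (fun _ => clzero); split; [intros; apply is_derive_cl_const |].
  apply bounded_derivs_zero, Rmult_le_pos; auto.
Qed.

Lemma bounded_derivs_add n : forall M1 M2 F G, bounded_derivs n M1 F -> bounded_derivs n M2 G ->
  bounded_derivs n (M1 + M2) (fun t => cladd (F t) (G t)).
Proof.
  induction n; intros M1 M2 F G [HF HF'] [HG HG']; split;
    try (intros t Ht; eapply Rle_trans; [apply cnorm_add | specialize (HF t Ht); specialize (HG t Ht); lra]);
    auto.
  destruct HF' as [F' [HFD HFS]], HG' as [G' [HGD HGS]].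
  exists (fun s => cladd (F' s) (G' s)); split; [intros; apply is_derive_cl_add; auto |].
  replace ((M1 + M2) * lam) with (M1 * lam + M2 * lam) by ring; auto.
Qed.

Lemma bounded_derivs_opp n : forall M F, bounded_derivs n M F -> bounded_derivs n M (fun t => clopp (F t)).
Proof.
  induction n; intros M F [HF HF']; split; try (intros t Ht; rewrite cnorm_opp; auto); auto.
  destruct HF' as [F' [HFD HFS]]; exists (fun s => clopp (F' s)); split; auto.
  intros; apply is_derive_cl_opp; auto.
Qed.

(* Leibniz rule: the j-th derivative of F G has at most 2^j terms. *)
Lemma bounded_derivs_mul n : forall M1 M2 F G, bounded_derivs n M1 F -> bounded_derivs n M2 G ->
  bounded_derivs n (2 ^ n * M1 * M2) (fun t => clmul (F t) (G t)).
Proof.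
  induction n as [|n IHn]; intros M1 M2 F G HF HG.
  - destruct HF as [HF _], HG as [HG _]; split; auto.
    intros t Ht; eapply Rle_trans; [apply cnorm_mul |]; simpl.
    specialize (HF t Ht); specialize (HG t Ht).
    assert (H0 := cnorm_ge0 (F t)); assert (H1 := cnorm_ge0 (G t)); nra.
  - assert (HM1 := bounded_derivs_ge0 _ _ _ HF); assert (HM2 := bounded_derivs_ge0 _ _ _ HG).
    assert (HFn := bounded_derivs_pred _ _ _ HF); assert (HGn := bounded_derivs_pred _ _ _ HG).
    assert (Hp : 1 <= 2 ^ S n) by (apply pow_R1_Rle; lra).
    destruct HF as [HF [F' [HFD HFS]]], HG as [HG [G' [HGD HGS]]]; split.
    + intros t Ht; eapply Rle_trans; [apply cnorm_mul |].
      specialize (HF t Ht); specialize (HG t Ht).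
      assert (H0 := cnorm_ge0 (F t)); assert (H1 := cnorm_ge0 (G t)).
      assert (cnorm (F t) * cnorm (G t) <= M1 * M2) by nra.
      assert (0 <= M1 * M2) by nra; nra.
    + exists (fun s => cladd (clmul (F' s) (G s)) (clmul (F s) (G' s))); split.
      * intros; apply is_derive_cl_mul; auto.
      * replace (2 ^ S n * M1 * M2 * lam) with (2 ^ n * (M1 * lam) * M2 + 2 ^ n * M1 * (M2 * lam))
          by (simpl; ring).
        apply bounded_derivs_add; auto.
Qed.

Lemma bounded_derivs_pow n M F m : bounded_derivs n M F ->
  bounded_derivs n ((2 ^ n * M) ^ m) (fun t => clpow (F t) m).
Proof.
  intros HF; induction m; simpl.
  - apply bounded_derivs_const; rewrite cnorm_one; lra.
  - replace (2 ^ n * M * (2 ^ n * M) ^ m) with (2 ^ n * (2 ^ n * M) ^ m * M) by ring.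
    apply (bounded_derivs_mul n _ _ (fun t => clpow (F t) m) F); auto.
Qed.

Lemma bounded_derivs_inv n : forall M F, 0 <= M -> 2 ^ n * M <= lam ->
  (forall t, Rabs t < r -> cnorm (F t) <= M) ->
  (forall t, Rabs t < r -> is_derive_cl F (fun s => clopp (clmul (F s) (F s))) t) ->
  bounded_derivs n M F.
Proof.
  induction n; intros M F HM Hl HB HD; split; auto.
  assert (HnM : 0 <= 2 ^ n * M) by (apply Rmult_le_pos; [apply pow_le; lra | auto]).
  assert (Hl' : 2 ^ n * M <= lam) by (simpl in Hl; lra).
  exists (fun s => clopp (clmul (F s) (F s))); split; auto.
  apply bounded_derivs_opp, (bounded_derivs_le _ (2 ^ n * M * M)); [nra |].
  apply bounded_derivs_mul; apply IHn; auto.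
Qed.

Lemma bounded_derivs_affine n M F K : (forall t, Rabs t < r -> cnorm (F t) <= M) ->
  (forall t, Rabs t < r -> is_derive_cl F (fun _ => K) t) -> cnorm K <= M * lam ->
  bounded_derivs n M F.
Proof.
  intros HB HD HK; destruct n; split; auto.
  exists (fun _ => K); split; auto; apply bounded_derivs_const; auto.
Qed.

Lemma bounded_derivs_chain n : forall M F, bounded_derivs n M F -> exists D, D O = F /\
  deriv_chain r n D /\ (forall j t, (j <= n)%nat -> Rabs t < r -> cnorm (D j t) <= M * lam ^ j).
Proof.
  induction n; intros M F [HF HF'].
  - exists (fun _ => F); split; [reflexivity | split]; intros j t Hj; [lia |].
    intros Ht; replace j with O by lia; simpl; rewrite Rmult_1_r; auto.
  - destruct HF' as [F' [HD HS]], (IHn _ _ HS) as [D [HD0 [HD1 HD2]]].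
    exists (fun j => match j with O => F | S j' => D j' end); split; [reflexivity | split].
    + intros [|j] t Hj Ht; [rewrite HD0; auto | apply HD1; auto; lia].
    + intros [|j] t Hj Ht; simpl; [rewrite Rmult_1_r; auto |].
      rewrite <- Rmult_assoc; apply HD2; auto; lia.
Qed.

Fixpoint poly_deg (n : nat) (F : R -> Cl) {struct n} : Prop :=
  exists F', (forall t, Rabs t < r -> is_derive_cl F F' t) /\
  match n with
  | O => forall t, Rabs t < r -> ceq (F' t) clzero
  | S n' => poly_deg n' F'
  end.

Lemma poly_deg_ext n F G : (forall t, Rabs t < r -> ceq (F t) (G t)) -> poly_deg n F -> poly_deg n G.
Proof.
  intros HE HF; assert (Hloc : forall t, Rabs t < r -> locally t (fun s => ceq (F s) (G s)))
    by (intros t Ht; eapply filter_imp; [| apply (ball_locally r t Ht)]; auto).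
  destruct n; destruct HF as [F' [HD HS]]; exists F'; split; auto;
    intros t Ht; apply (is_derive_cl_ext_loc F); auto.
Qed.

Lemma poly_deg_zero n : poly_deg n (fun _ => clzero).
Proof.
  induction n; exists (fun _ => clzero); split; try (intros; apply is_derive_cl_const); auto.
  intros; reflexivity.
Qed.

Lemma poly_deg_const n K : poly_deg n (fun _ => K).
Proof.
  destruct n; exists (fun _ => clzero); split; try (intros; apply is_derive_cl_const).
  - intros; reflexivity.
  - apply poly_deg_zero.
Qed.

Lemma poly_deg_succ n : forall F, poly_deg n F -> poly_deg (S n) F.
Proof.
  induction n; intros F [F' [HD HS]]; exists F'; split; auto.
  apply (poly_deg_ext 0 (fun _ => clzero)); [intros t Ht; symmetry; auto | apply poly_deg_const].
Qed.

Lemma poly_deg_le m n F : (m <= n)%nat -> poly_deg m F -> poly_deg n F.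
Proof. intros H; induction H; auto; intros; apply poly_deg_succ; auto. Qed.

Lemma poly_deg_add n : forall F G, poly_deg n F -> poly_deg n G -> poly_deg n (fun t => cladd (F t) (G t)).
Proof.
  induction n; intros F G [F' [HFD HFS]] [G' [HGD HGS]];
    exists (fun s => cladd (F' s) (G' s)); (split; [intros; apply is_derive_cl_add; auto |]); auto.
  intros t Ht; rewrite (HFS t Ht), (HGS t Ht); intros A HA; unfold cladd, clzero; ring.
Qed.

Lemma poly_deg_sum n (f : nat -> R -> Cl) m : (forall i, (i < m)%nat -> poly_deg n (f i)) ->
  poly_deg n (fun t => clsum (fun i => f i t) m).
Proof.
  induction m; intros H; simpl; [apply poly_deg_const |].
  apply (poly_deg_add n (fun t => clsum (fun i => f i t) m) (f m)); auto.
Qed.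

Lemma poly_deg_derive n F : poly_deg n F -> exists F', (forall t, Rabs t < r -> is_derive_cl F F' t) /\
  ((forall t, Rabs t < r -> ceq (F' t) clzero) \/ (exists n', n = S n' /\ poly_deg n' F')).
Proof. destruct n; intros [F' [HD HS]]; exists F'; split; auto; right; exists n; auto. Qed.

Lemma poly_deg_mul n : forall a b F G, (a + b)%nat = n -> poly_deg a F -> poly_deg b G ->
  poly_deg n (fun t => clmul (F t) (G t)).
Proof.
  induction n; intros a b F G Hab HF HG;
    destruct (poly_deg_derive a F HF) as [F' [HFD HFS]], (poly_deg_derive b G HG) as [G' [HGD HGS]];
    exists (fun s => cladd (clmul (F' s) (G s)) (clmul (F s) (G' s)));
    (split; [intros; apply is_derive_cl_mul; auto |]).
  - destruct HFS as [HFS | [a' [Ha _]]], HGS as [HGS | [b' [Hb _]]]; try lia.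
    intros t Ht; rewrite (HFS t Ht), (HGS t Ht), clmul0l, clmul0r.
    intros A HA; unfold cladd, clzero; ring.
  - apply poly_deg_add.
    + destruct HFS as [HFS | [a' [Ha HF']]]; [| apply (IHn a' b); auto; lia].
      apply (poly_deg_ext n (fun _ => clzero)); [| apply poly_deg_zero].
      intros t Ht; rewrite (HFS t Ht), clmul0l; reflexivity.
    + destruct HGS as [HGS | [b' [Hb HG']]]; [| apply (IHn a b'); auto; lia].
      apply (poly_deg_ext n (fun _ => clzero)); [| apply poly_deg_zero].
      intros t Ht; rewrite (HGS t Ht), clmul0r; reflexivity.
Qed.

Lemma poly_deg_chain n : forall F, poly_deg n F -> exists D, D O = F /\
  deriv_chain r (S n) D /\ (forall t, Rabs t < r -> ceq (D (S n) t) clzero).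
Proof.
  induction n; intros F [F' [HD HS]].
  - exists (fun j => match j with O => F | _ => F' end); split; [reflexivity | split]; auto.
    intros j t Hj Ht; replace j with O by lia; auto.
  - destruct (IHn _ HS) as [D [HD0 [HD1 HD2]]].
    exists (fun j => match j with O => F | S j' => D j' end); split; [reflexivity | split]; auto.
    intros [|j] t Hj Ht; [rewrite HD0; auto | apply HD1; auto; lia].
Qed.

End DerivativeBounds.

Section RealChain.
Variables (g : R -> R) (f : nat -> R -> R) (r : R) (n : nat).
Hypothesis g_f0 : forall t, Rabs t < r -> g t = f O t.
Hypothesis f_chain : forall j t, (j < n)%nat -> Rabs t < r -> is_derive (f j) t (f (S j) t).

Lemma Derive_n_chain j t : (j <= n)%nat -> Rabs t < r -> Derive_n g j t = f j t.
Proof.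
  revert t; induction j; intros t Hj Ht; simpl; auto.
  rewrite (Derive_ext_loc _ (f j)).
  - apply is_derive_unique, f_chain; auto; lia.
  - eapply filter_imp; [| apply (ball_locally r t Ht)]; intros s Hs; apply IHj; auto; lia.
Qed.

Lemma is_derive_n_chain j t : (j < n)%nat -> Rabs t < r -> is_derive_n g (S j) t (f (S j) t).
Proof.
  intros Hj Ht; simpl; apply (is_derive_ext_loc (f j)).
  - eapply filter_imp; [| apply (ball_locally r t Ht)].
    intros s Hs; symmetry; apply Derive_n_chain; auto; lia.
  - apply f_chain; auto.
Qed.

Lemma ex_derive_n_chain j t : (j <= n)%nat -> Rabs t < r -> ex_derive_n g j t.
Proof.
  destruct j as [|j]; intros Hj Ht; [exact I |].
  exists (f (S j) t); apply (is_derive_n_chain j t); auto; lia.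
Qed.

End RealChain.

Section ClChain.
Variables (F : R -> Cl) (D : nat -> R -> Cl) (r : R) (n : nat) (A : nat).
Hypothesis D0 : D O = F.
Hypothesis D_chain : deriv_chain r n D.
Hypothesis A_lt8 : (A < 8)%nat.

Let coord_chain : forall j t, (j < n)%nat -> Rabs t < r -> is_derive (fun s => D j s A) t (D (S j) t A).
Proof. intros; apply D_chain; auto. Qed.
Let coord_0 : forall t, Rabs t < r -> F t A = D O t A.
Proof. intros; rewrite D0; auto. Qed.

Lemma Derive_n_cl_chain j t : (j <= n)%nat -> Rabs t < r -> Derive_n (fun s => F s A) j t = D j t A.
Proof. apply (Derive_n_chain _ (fun j s => D j s A) r n); auto. Qed.

Lemma ex_derive_n_cl_chain j t : (j <= n)%nat -> Rabs t < r -> ex_derive_n (fun s => F s A) j t.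
Proof. apply (ex_derive_n_chain _ (fun j s => D j s A) r n); auto. Qed.

Lemma is_derive_Derive_n_cl_chain j t : (j < n)%nat -> Rabs t < r ->
  is_derive (Derive_n (fun s => F s A) j) t (Derive_n (fun s => F s A) (S j) t).
Proof.
  intros Hj Ht; rewrite (Derive_n_cl_chain (S j)) by (auto; lia).
  apply (is_derive_n_chain _ (fun j s => D j s A) r n); auto.
Qed.

End ClChain.

Lemma bounded_derivs_ex_derive_n r lam n M F A t : bounded_derivs r lam n M F -> (A < 8)%nat ->
  Rabs t < r -> forall k, (k <= n)%nat -> ex_derive_n (fun s => F s A) k t.
Proof.
  intros HF HA Ht k Hk; destruct (bounded_derivs_chain r lam n M F HF) as [D [HD0 [HD _]]].
  apply (ex_derive_n_cl_chain F D r n A); auto.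
Qed.

Lemma Un_cv_Series (a M : nat -> R) : (forall p, Rabs (a p) <= M p) -> ex_series M ->
  Un_cv (fun N => sum_f_R0 a N) (Series a).
Proof. intros H HM; apply is_series_Reals, Series_correct, (ex_series_le a M); auto. Qed.

Lemma Series_tail_le (a M : nat -> R) n : (forall p, Rabs (a p) <= M p) -> ex_series M ->
  Rabs (Series a - sum_f_R0 a n) <= Series M - sum_f_R0 M n.
Proof.
  intros H HM; assert (Ha : ex_series a) by (apply (ex_series_le a M); auto).
  rewrite (Series_incr_n a (S n)), (Series_incr_n M (S n)) by (auto; lia); simpl pred.
  replace (sum_f_R0 a n + Series (fun k => a (S n + k)%nat) - sum_f_R0 a n)
    with (Series (fun k => a (S n + k)%nat)) by ring.
  replace (sum_f_R0 M n + Series (fun k => M (S n + k)%nat) - sum_f_R0 M n)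
    with (Series (fun k => M (S n + k)%nat)) by ring.
  assert (HMt : ex_series (fun k => M (S n + k)%nat)) by (apply (ex_series_incr_n M (S n)); auto).
  assert (Hat : ex_series (fun k => Rabs (a (S n + k)%nat)))
    by (apply (ex_series_le (fun k => Rabs (a (S n + k)%nat)) (fun k => M (S n + k)%nat)); auto;
        intros k; rewrite Rabs_Rabsolu; auto).
  eapply Rle_trans; [apply Series_Rabs; auto |].
  apply Series_le; auto; intros k; split; [apply Rabs_pos | auto].
Qed.

Lemma derivable_pt_lim_sum_f_R0 (f df : nat -> R -> R) y N :
  (forall p, derivable_pt_lim (f p) y (df p y)) ->
  derivable_pt_lim (fun x => sum_f_R0 (fun p => f p x) N) y (sum_f_R0 (fun p => df p y) N).
Proof.
  intros H; induction N; simpl; auto.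
  apply (derivable_pt_lim_plus (fun x => sum_f_R0 (fun p => f p x) N) (f (S N))); auto.
Qed.

(* The differentiated partial sums converge uniformly, so [derivable_pt_lim_CVU] applies. *)
Lemma is_derive_Series (r : R) (f : nat -> nat -> R -> R) (M : nat -> R) (n : nat) :
  0 < r -> ex_series M ->
  (forall p j t, (j < n)%nat -> Rabs t < r -> is_derive (f p j) t (f p (S j) t)) ->
  (forall p j t, (j <= n)%nat -> Rabs t < r -> Rabs (f p j t) <= M p) ->
  forall j t, (S j < n)%nat -> Rabs t < r ->
  is_derive (fun s => Series (fun p => f p j s)) t (Series (fun p => f p (S j) t)).
Proof.
  intros Hr HM HD HB j t Hj Ht.
  set (rr := mkposreal r Hr).
  assert (Hball : forall y, Boule 0 rr y -> Rabs y < r)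
    by (intros y; unfold Boule; simpl; rewrite Rminus_0_r; auto).
  assert (HM_abs : forall p, Rabs (M p) <= M p).
  { intros p; assert (H0 := HB p O 0 ltac:(lia) ltac:(rewrite Rabs_R0; lra)).
    rewrite Rabs_right; [lra |]; apply Rle_ge, (Rle_trans _ _ _ (Rabs_pos _) H0). }
  assert (HCVU : CVU (fun N y => sum_f_R0 (fun p => f p (S j) y) N)
                     (fun s => Series (fun p => f p (S j) s)) 0 rr).
  { intros eps Heps; destruct (Un_cv_Series M M HM_abs HM eps Heps) as [N HN].
    exists N; intros m y Hm Hy.
    eapply Rle_lt_trans; [apply (Series_tail_le _ M m); auto; intros p; apply HB; auto; lia |].
    specialize (HN m Hm); unfold Rdist in HN; rewrite Rabs_minus_sym in HN.
    eapply Rle_lt_trans; [apply Rle_abs | auto]. }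
  apply is_derive_Reals.
  apply (derivable_pt_lim_CVU (fun N y => sum_f_R0 (fun p => f p j y) N)
    (fun N y => sum_f_R0 (fun p => f p (S j) y) N)
    (fun s => Series (fun p => f p j s)) (fun s => Series (fun p => f p (S j) s)) t 0 rr).
  - unfold Boule; simpl; rewrite Rminus_0_r; auto.
  - intros y N Hy; apply (derivable_pt_lim_sum_f_R0 (fun p => f p j) (fun p => f p (S j))).
    intros p; apply is_derive_Reals, HD; auto; lia.
  - intros y Hy; apply (Un_cv_Series _ M); auto; intros p; apply HB; auto; lia.
  - exact HCVU.
  - apply (CVU_continuity _ _ 0 rr HCVU); intros N y Hy.
    apply derivable_continuous_pt; exists (sum_f_R0 (fun p => f p (S (S j)) y) N).
    apply (derivable_pt_lim_sum_f_R0 (fun p => f p (S j)) (fun p => f p (S (S j)))).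
    intros p; apply is_derive_Reals, HD; auto.
Qed.

Lemma ex_series_rsum_bounded (a : nat -> R) B :
  (forall p, 0 <= a p) -> (forall P, rsum a P <= B) -> ex_series a.
Proof.
  intros Ha HB; destruct (ex_finite_lim_seq_incr (sum_n a) B) as [l Hl].
  - intros n; rewrite !sum_n_Reals; simpl; specialize (Ha (S n)); lra.
  - intros n; rewrite sum_n_Reals, <- rsum_sum_f_R0; auto.
  - exists l; exact Hl.
Qed.

Definition indb (b : bool) : R := if b then 1 else 0.

Lemma rsum_indb_eq (f : nat -> R) k M : rsum (fun m => indb (m =? k)%nat * f m) M = indb (k <? M)%nat * f k.
Proof.
  induction M; simpl; [ring |]; rewrite IHM.
  destruct (Nat.eq_dec M k) as [->|Hne].
  - rewrite Nat.eqb_refl, (proj2 (Nat.ltb_ge k k)), (proj2 (Nat.ltb_lt k (S k))) by lia; simpl; ring.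
  - replace (M =? k)%nat with false by (symmetry; apply Nat.eqb_neq; auto).
    replace (k <? S M)%nat with (k <? M)%nat; [simpl; ring |].
    destruct (Nat.ltb_spec k M), (Nat.ltb_spec k (S M)); auto; lia.
Qed.

Lemma rsum_involution (g : nat -> R) (sigma : nat -> nat) M :
  (forall n, sigma (sigma n) = n) -> (forall n, g n <> 0 -> (n < M)%nat /\ (sigma n < M)%nat) ->
  rsum (fun n => g (sigma n)) M = rsum g M.
Proof.
  intros Hss Hsupp.
  assert (Hpick : forall m, indb (m <? M)%nat * g m = g m).
  { intros m; destruct (Req_dec (g m) 0) as [E|E]; [rewrite E; ring |].
    rewrite (proj2 (Nat.ltb_lt m M)) by apply (Hsupp m E); simpl; ring. }
  transitivity (rsum (fun n => rsum (fun m => indb (m =? sigma n)%nat * g m) M) M).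
  { apply rsum_ext; intros n _; rewrite rsum_indb_eq, Hpick; auto. }
  rewrite rsum_swap; apply rsum_ext; intros m _.
  rewrite (rsum_ext _ (fun n => indb (n =? sigma m)%nat * g m)).
  - rewrite (rsum_indb_eq (fun _ => g m)); destruct (Req_dec (g m) 0) as [E|E]; [rewrite E; ring |].
    rewrite (proj2 (Nat.ltb_lt (sigma m) M)) by apply (Hsupp m E); simpl; ring.
  - intros n _; f_equal; f_equal; apply eq_true_iff_eq; rewrite !Nat.eqb_eq.
    split; intros ->; auto.
Qed.

Lemma rsum_from (f : nat -> R) N M : (N <= M)%nat ->
  rsum (fun n => indb (N <=? n)%nat * f n) M = rsum f M - rsum f N.
Proof.
  induction 1.
  - assert (H0 : forall K, (K <= N)%nat -> rsum (fun n => indb (N <=? n)%nat * f n) K = 0).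
    { induction K; intros HK; simpl; auto; rewrite IHK by lia.
      rewrite (proj2 (Nat.leb_gt N K)) by lia; simpl; ring. }
    rewrite H0; auto; ring.
  - simpl; rewrite IHle, (proj2 (Nat.leb_le N m)) by lia; simpl; ring.
Qed.

Lemma bounded_image (sigma : nat -> nat) N : exists M, forall n, (n < N)%nat -> (sigma n < M)%nat.
Proof.
  induction N as [|N [M HM]]; [exists O; lia |].
  exists (Nat.max M (S (sigma N))); intros n Hn.
  destruct (Nat.eq_dec n N) as [->|]; [lia | specialize (HM n ltac:(lia)); lia].
Qed.

Lemma rsum_odd_involution (a : nat -> R) (sigma : nat -> nat) (S : nat -> bool) M :
  (forall n, sigma (sigma n) = n) -> (forall n, a (sigma n) = - a n) ->
  (forall n, S (sigma n) = S n) -> (forall n, S n = true -> (n < M)%nat /\ (sigma n < M)%nat) ->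
  rsum (fun n => indb (S n) * a n) M = 0.
Proof.
  intros Hss Has HS Hsupp; set (g := fun n => indb (S n) * a n).
  assert (Hodd : rsum (fun n => g (sigma n)) M = - rsum g M).
  { rewrite <- (Rmult_1_l (rsum g M)), Ropp_mult_distr_l, <- rsum_scal.
    apply rsum_ext; intros n _; unfold g; rewrite HS, Has; ring. }
  rewrite rsum_involution in Hodd; [lra | auto |].
  intros n Hn; apply Hsupp; unfold g, indb in Hn; destruct (S n); auto.
  exfalso; apply Hn; ring.
Qed.

(* A partial sum over a sigma-stable finite set vanishes; the rest is a tail of sum |a n|. *)
Lemma Series_odd_involution (a : nat -> R) (sigma : nat -> nat) :
  (forall n, sigma (sigma n) = n) -> (forall n, a (sigma n) = - a n) ->
  ex_series (fun n => Rabs (a n)) -> Series a = 0.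
Proof.
  intros Hss Has Hab.
  assert (Hcv := Un_cv_Series a (fun n => Rabs (a n)) (fun n => Rle_refl _) Hab).
  assert (Hcva := Un_cv_Series (fun n => Rabs (a n)) (fun n => Rabs (a n))
                   (fun n => Req_le _ _ (Rabs_Rabsolu (a n))) Hab).
  set (Sa := Series a) in *; set (SA := Series (fun n => Rabs (a n))) in *.
  assert (Hsmall : forall eps, 0 < eps -> Rabs Sa <= 3 * eps).
  { intros eps Heps.
    destruct (Hcva eps Heps) as [N0 HN0]; set (N := S N0).
    destruct (bounded_image sigma N) as [M0 HM0]; destruct (Hcv eps Heps) as [N1 HN1].
    set (M := S (Nat.max (Nat.max N M0) N1)).
    set (inS := fun n => ((n <? N) || (sigma n <? N))%nat).
    assert (Hg0 : rsum (fun n => indb (inS n) * a n) M = 0).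
    { apply (rsum_odd_involution a sigma); auto; [intros n; unfold inS; rewrite Hss; apply orb_comm |].
      intros n Hn; unfold inS in Hn; destruct (Nat.ltb_spec n N), (Nat.ltb_spec (sigma n) N);
        simpl in Hn; try discriminate; split; try lia.
      - specialize (HM0 n ltac:(lia)); lia.
      - rewrite <- (Hss n); specialize (HM0 (sigma n) ltac:(lia)); lia. }
    set (rest := rsum (fun n => (1 - indb (inS n)) * a n) M).
    assert (Hrest : Rabs rest <= rsum (fun n => Rabs (a n)) M - rsum (fun n => Rabs (a n)) N).
    { unfold rest; rewrite <- rsum_from by (unfold M; lia).
      eapply Rle_trans; [apply rsum_Rabs | apply rsum_le]; intros n _.
      rewrite Rabs_mult; unfold inS; assert (Hn := Rabs_pos (a n)).
      destruct (Nat.ltb_spec n N), (Nat.leb_spec N n); try lia; simpl;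
        [rewrite Rminus_diag, Rabs_R0; lra |].
      destruct (sigma n <? N)%nat; simpl; rewrite ?Rminus_diag, ?Rminus_0_r, ?Rabs_R0, ?Rabs_R1; lra. }
    assert (Hsplit : rsum a M = rest).
    { rewrite <- (Rplus_0_l rest), <- Hg0; unfold rest; rewrite <- rsum_plus.
      apply rsum_ext; intros; ring. }
    assert (E1 := HN0 (pred M) ltac:(unfold M; lia)); assert (E2 := HN0 N0 ltac:(lia)).
    assert (E3 := HN1 (pred M) ltac:(unfold M; lia)).
    unfold Rdist in E1, E2, E3; rewrite <- !rsum_sum_f_R0 in E1, E2, E3.
    replace (S (pred M)) with M in E1, E3 by (unfold M; lia); fold N in E2.
    rewrite Hsplit in E3; apply Rabs_def2 in E1; apply Rabs_def2 in E2; destruct E1, E2.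
    assert (Rabs Sa <= Rabs (rest - Sa) + Rabs rest)
      by (rewrite Rabs_minus_sym; eapply Rle_trans; [| apply Rabs_triang]; right; f_equal; ring).
    lra. }
  destruct (Req_dec Sa 0) as [E|E]; auto; exfalso.
  assert (Hp : 0 < Rabs Sa) by (apply Rabs_pos_lt; auto).
  specialize (Hsmall (Rabs Sa / 6) ltac:(lra)); lra.
Qed.

Import ListNotations.

Lemma rsum_indb_length (S : nat -> bool) P : rsum (fun p => indb (S p)) P = INR (length (filter S (seq 0 P))).
Proof.
  induction P; [reflexivity |].
  cbn [rsum]; rewrite IHP, seq_S, filter_app, length_app, plus_INR; simpl.
  unfold indb; destruct (S P); simpl; ring.
Qed.

Lemma rsum_indb_le_injective {T : Type} (S : nat -> bool) (c : nat -> T) (U : list T) P :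
  (forall p, (p < P)%nat -> S p = true -> In (c p) U) ->
  (forall p q, (p < P)%nat -> (q < P)%nat -> S p = true -> S q = true -> c p = c q -> p = q) ->
  rsum (fun p => indb (S p)) P <= INR (length U).
Proof.
  intros Hin Hinj; rewrite rsum_indb_length; apply le_INR.
  set (l := filter S (seq 0 P)).
  assert (Hl : forall p, In p l -> (p < P)%nat /\ S p = true)
    by (intros p; unfold l; rewrite filter_In, in_seq; intros [Hp Sp]; split; [lia | auto]).
  rewrite <- (length_map c l); apply NoDup_incl_length.
  - apply NoDup_map_NoDup_ForallPairs; [| apply NoDup_filter, seq_NoDup].
    intros p q Hp Hq; apply Hl in Hp, Hq; apply Hinj; tauto.
  - intros y Hy; apply in_map_iff in Hy; destruct Hy as [p [<- Hp]]; apply Hl in Hp; apply Hin; tauto.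
Qed.

Fixpoint boxes (L d : nat) : list (list nat) :=
  match d with
  | O => [[]]
  | S d' => flat_map (fun x => map (cons x) (boxes L d')) (seq 0 L)
  end.

Lemma length_boxes L d : length (boxes L d) = (L ^ d)%nat.
Proof.
  induction d; simpl; auto.
  rewrite (flat_map_constant_length (c := (L ^ d)%nat)), length_seq; [lia |].
  intros x _; rewrite length_map; auto.
Qed.

Lemma in_boxes L d l : length l = d -> (forall x, In x l -> (x < L)%nat) -> In l (boxes L d).
Proof.
  revert l; induction d; intros [|x l] Hlen Hlt; simpl in *; try lia; auto.
  apply in_flat_map; exists x; split; [apply in_seq; split; [lia | apply Hlt; auto] |].
  apply in_map, IHd; auto.
Qed.

Definition kmax (k : nat -> Z) : nat :=
  Z.to_nat (Z.max (Z.max (Z.abs (k 0%nat)) (Z.abs (k 1%nat))) (Z.max (Z.abs (k 2%nat)) (Z.abs (k 3%nat)))).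

Lemma kmax_ge k a : (a < 4)%nat -> (Z.abs (k a) <= Z.of_nat (kmax k))%Z.
Proof. intros Ha; unfold kmax; destruct a as [|[|[|[|]]]]; lia. Qed.

Lemma kmax_attained k : exists a, (a < 4)%nat /\ Z.abs (k a) = Z.of_nat (kmax k).
Proof.
  unfold kmax.
  destruct (Z.max_spec (Z.max (Z.abs (k 0%nat)) (Z.abs (k 1%nat)))
                       (Z.max (Z.abs (k 2%nat)) (Z.abs (k 3%nat)))) as [[_ E]|[_ E]]; rewrite E.
  - destruct (Z.max_spec (Z.abs (k 2%nat)) (Z.abs (k 3%nat))) as [[_ E']|[_ E']]; rewrite E';
      [exists 3%nat | exists 2%nat]; split; lia.
  - destruct (Z.max_spec (Z.abs (k 0%nat)) (Z.abs (k 1%nat))) as [[_ E']|[_ E']]; rewrite E';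
      [exists 1%nat | exists 0%nat]; split; lia.
Qed.

Lemma kmax_ge1 k : (exists a, (a < 4)%nat /\ k a <> 0%Z) -> (1 <= kmax k)%nat.
Proof. intros [a [Ha Hk]]; assert (H := kmax_ge k a Ha); lia. Qed.

(* [32 / 2^(5 j)] for the least [j] with [n <= 2^j] already dominates [1 / n^5]. *)
Lemma inv_pow5_le_dyadic n J : (1 <= n)%nat -> (n <= 2 ^ J)%nat ->
  1 / INR n ^ 5 <= rsum (fun j => indb (n <=? 2 ^ j)%nat * (32 / 2 ^ (5 * j))) (S J).
Proof.
  intros Hn HJ; set (j0 := Nat.log2_up n).
  assert (Hj0 : (j0 <= J)%nat) by (apply Nat.log2_up_le_pow2; lia).
  assert (Hj0n : (n <= 2 ^ j0)%nat /\ (2 ^ j0 <= 2 * n)%nat).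
  { destruct (Nat.eq_dec n 1) as [->|Hn1]; [unfold j0; simpl; lia |].
    destruct (Nat.log2_up_spec n) as [Hlo Hhi]; [lia |]; fold j0 in Hlo, Hhi; split; auto.
    destruct j0 as [|j1]; simpl in *; lia. }
  destruct Hj0n as [H1 H2].
  eapply Rle_trans; [| apply (rsum_ge_term (fun j => indb (n <=? 2 ^ j)%nat * (32 / 2 ^ (5 * j))) (S J) j0)].
  - rewrite (proj2 (Nat.leb_le _ _) H1); simpl indb; rewrite Rmult_1_l.
    apply le_INR in H2; apply le_INR in Hn; rewrite mult_INR, pow_INR in H2.
    replace (INR 2) with 2 in H2 by (simpl; ring).
    simpl (INR 1) in Hn; rewrite (Nat.mul_comm 5 j0), pow_mult.
    assert (Hx : 0 < 2 ^ j0) by (apply pow_lt; lra).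
    set (x := 2 ^ j0) in *; set (y := INR n) in *.
    replace (1 / y ^ 5) with (32 / (2 * y) ^ 5) by (field; lra).
    unfold Rdiv; apply Rmult_le_compat_l; [lra |].
    apply Rinv_le_contravar; [apply pow_lt; lra | apply pow_incr; split; lra].
  - lia.
  - intros j _; apply Rmult_le_pos; [unfold indb; destruct (n <=? 2 ^ j)%nat; lra |].
    unfold Rdiv; apply Rmult_le_pos; [lra | apply Rlt_le, Rinv_0_lt_compat, pow_lt; lra].
Qed.

Lemma rsum_geom_half n : rsum (fun j => (/ 2) ^ j) n = 2 - 2 * (/ 2) ^ n.
Proof. induction n; simpl rsum; [simpl; ring | rewrite IHn; simpl; field]. Qed.

Section LatticeCount.
Variable k : nat -> nat -> Z.
Hypothesis k_nz : forall p, exists a, (a < 4)%nat /\ k p a <> 0%Z.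
Hypothesis k_inj : forall p q, (forall a, (a < 4)%nat -> k p a = k q a) -> p = q.

Lemma count_kmax_le R0 P : rsum (fun p => indb (kmax (k p) <=? R0)%nat) P <= INR (2 * R0 + 1) ^ 4.
Proof.
  set (shifted := fun p => map (fun a => Z.to_nat (k p a + Z.of_nat R0)) (seq 0 4)).
  rewrite <- pow_INR, <- (length_boxes (2 * R0 + 1) 4).
  apply (rsum_indb_le_injective _ shifted).
  - intros p _ Hp; apply Nat.leb_le in Hp; apply in_boxes; [reflexivity |].
    intros x Hx; apply in_map_iff in Hx; destruct Hx as [a [<- Ha]]; apply in_seq in Ha.
    assert (G := kmax_ge (k p) a ltac:(lia)); lia.
  - intros p q _ _ Hp Hq E; apply Nat.leb_le in Hp, Hq; apply k_inj; intros a Ha.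
    apply map_ext_in_iff with (a := a) in E; [| apply in_seq; lia].
    assert (Gp := kmax_ge (k p) a Ha); assert (Gq := kmax_ge (k q) a Ha); lia.
Qed.

(* Dyadic decomposition: at most (2^(j+1) + 1)^4 of the k p lie in the j-th box. *)
Lemma sum_inv_kmax_pow5_le P : rsum (fun p => 1 / INR (kmax (k p)) ^ 5) P <= 16384.
Proof.
  destruct (bounded_image (fun p => kmax (k p)) P) as [J HJ].
  set (term := fun j => 32 / 2 ^ (5 * j)).
  assert (Hterm : forall j, 0 <= term j)
    by (intros j; unfold term, Rdiv; apply Rmult_le_pos; [lra | apply Rlt_le, Rinv_0_lt_compat, pow_lt; lra]).
  apply Rle_trans with (rsum (fun p => rsum (fun j => indb (kmax (k p) <=? 2 ^ j)%nat * term j) (S J)) P).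
  { apply rsum_le; intros p Hp; apply inv_pow5_le_dyadic; [apply kmax_ge1; auto |].
    specialize (HJ p Hp); assert (J < 2 ^ J)%nat by (apply Nat.pow_gt_lin_r; lia); lia. }
  rewrite rsum_swap.
  apply Rle_trans with (rsum (fun j => term j * INR (2 * 2 ^ j + 1) ^ 4) (S J)).
  { apply rsum_le; intros j _.
    rewrite (rsum_ext _ (fun p => term j * indb (kmax (k p) <=? 2 ^ j)%nat)) by (intros; ring).
    rewrite rsum_scal; apply Rmult_le_compat_l; auto; apply count_kmax_le. }
  apply Rle_trans with (rsum (fun j => 8192 * (/ 2) ^ j) (S J)).
  - apply rsum_le; intros j _; unfold term.
    rewrite plus_INR, mult_INR, pow_INR, (Nat.mul_comm 5 j), pow_mult, pow_inv.
    replace (INR 2) with 2 by (simpl; ring); replace (INR 1) with 1 by reflexivity.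
    assert (Hx : 1 <= 2 ^ j) by (apply pow_R1_Rle; lra); set (x := 2 ^ j) in *.
    apply Rle_trans with (32 / x ^ 5 * (4 * x) ^ 4).
    + apply Rmult_le_compat_l; [apply Rlt_le, Rdiv_lt_0_compat; [lra | apply pow_lt; lra] |].
      apply pow_incr; lra.
    + right; field; lra.
  - rewrite rsum_scal, rsum_geom_half; assert (0 <= (/ 2) ^ S J) by (apply pow_le; lra); lra.
Qed.

End LatticeCount.

Definition resolvent (x v : Para) (t : R) : Cl := para (pinv (psub (shift0 x t) v)).

(* x0 is the scalar direction, so d/dx0 (x - v)^{-1} = - (x - v)^{-2}. *)
Lemma is_derive_cl_resolvent x v t : pnorm2 (psub (shift0 x t) v) <> 0 ->
  is_derive_cl (resolvent x v) (fun s => clopp (clmul (resolvent x v s) (resolvent x v s))) t.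
Proof.
  intros Hn C HC; unfold clopp.
  do 8 (destruct C as [|C];
    [expand_clmul; unfold resolvent, para, pinv, psub, shift0, pnorm2 in *; simpl in *;
     auto_derive; unfold Rminus in *;
     try (field; (auto || (intro E; apply Hn; rewrite <- E; ring)); fail); auto |]); lia.
Qed.

Lemma resolvent_bounded_derivs r lam n x v d : 0 < r -> 0 < d ->
  (forall t, Rabs t < r -> d <= pmax (psub (shift0 x t) v)) -> 2 ^ n * (4 / d) <= lam ->
  bounded_derivs r lam n (4 / d) (resolvent x v).
Proof.
  intros Hr Hd Hb Hl.
  assert (H4d : 0 <= 4 / d) by (apply Rlt_le, Rdiv_lt_0_compat; lra).
  assert (Hlam : 0 <= lam) by (assert (0 < 2 ^ n) by (apply pow_lt; lra); nra).
  apply bounded_derivs_inv; auto.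
  - intros t Ht; specialize (Hb t Ht); eapply Rle_trans; [apply cnorm_para_pinv; lra |].
    apply Rmult_le_compat_l; [lra | apply Rinv_le_contravar; auto].
  - intros t Ht; apply is_derive_cl_resolvent, pnorm2_neq0; specialize (Hb t Ht); lra.
Qed.

Lemma resolvent_peq x v v' s A : peq v v' -> resolvent x v s A = resolvent x v' s A.
Proof.
  intros H; unfold resolvent, para, pinv, pnorm2, psub.
  rewrite (H 0%nat), (H 1%nat), (H 2%nat), (H 3%nat) by lia; reflexivity.
Qed.

Lemma resolvent_reflect x v s A :
  resolvent x (fun j => 2 * x j - v j) s A = - resolvent x v (- s) A.
Proof.
  unfold resolvent.
  replace (psub (shift0 x s) (fun j => 2 * x j - v j)) with (fun j => - psub (shift0 x (- s)) v j)
    by (apply functional_extensionality; intros j; unfold psub, shift0; destruct (j =? 0)%nat; ring).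
  set (y := psub (shift0 x (- s)) v).
  replace (pinv (fun j => - y j)) with (fun j => - pinv y j).
  - unfold para; destruct (A =? 0)%nat; [ring |]; destruct (A =? 1)%nat; [ring |].
    destruct (A =? 2)%nat; [ring |]; destruct (A =? 4)%nat; ring.
  - apply functional_extensionality; intros j; unfold pinv.
    replace (pnorm2 (fun j0 => - y j0)) with (pnorm2 y) by (unfold pnorm2; ring).
    destruct (j =? 0)%nat; unfold Rdiv; ring.
Qed.

Lemma is_derive_cl_para_shift0 x t : is_derive_cl (fun s => para (shift0 x s)) (fun _ => clone) t.
Proof.
  intros C HC; do 8 (destruct C as [|C]; [unfold para, shift0, clone; simpl; auto_derive; auto; ring |]); lia.
Qed.

Lemma is_derive_cl_para_shift0_mulr x c t :
  is_derive_cl (fun s => clmul (para (shift0 x s)) c) (fun _ => c) t.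
Proof.
  eapply is_derive_cl_ceq;
    [apply (is_derive_cl_mul (fun s => para (shift0 x s)) (fun _ => clone) (fun _ => c) (fun _ => clzero));
     [apply is_derive_cl_para_shift0 | apply is_derive_cl_const] |].
  simpl; rewrite clmul1l, clmul0r; intros C HC; unfold cladd, clzero; ring.
Qed.

Lemma is_derive_cl_para_shift0_mull x c t :
  is_derive_cl (fun s => clmul c (para (shift0 x s))) (fun _ => clmul c clone) t.
Proof.
  eapply is_derive_cl_ceq;
    [apply (is_derive_cl_mul (fun _ => c) (fun _ => clzero) (fun s => para (shift0 x s)) (fun _ => clone));
     [apply is_derive_cl_const | apply is_derive_cl_para_shift0] |].
  simpl; rewrite clmul0l; intros C HC; unfold cladd, clzero; ring.
Qed.

Lemma inL_pzero omega : inL omega pzero.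
Proof. exists (fun _ => 0%Z); intros j _; unfold pzero; simpl; ring. Qed.

Lemma inL_reflect_halfper omega eps y :
  inL omega y -> inL omega (fun j => 2 * halfper omega eps j - y j).
Proof.
  intros [k Hk]; exists (fun a => ((if eps a then 1 else 0) - k a)%Z); intros j Hj.
  rewrite Hk by auto; unfold halfper; cbn [rsum]; rewrite !minus_IZR.
  destruct (eps 0%nat), (eps 1%nat), (eps 2%nat), (eps 3%nat); simpl; ring.
Qed.

Lemma abs_indb_sub_2IZR (b : bool) (k : Z) : IZR (Z.abs k) <= Rabs (indb b - 2 * IZR k).
Proof.
  replace (indb b - 2 * IZR k) with (IZR ((if b then 1 else 0) - 2 * k)%Z)
    by (destruct b; unfold indb; rewrite minus_IZR, mult_IZR; simpl; ring).
  rewrite Rabs_Zabs; apply IZR_le; destruct b; lia.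
Qed.

Section HalfPeriod.
Variables (omega w : nat -> Para) (eps : nat -> bool) (K : R).
Hypothesis w_enum : enumerates_L0 omega w.
Hypothesis eps_nz : exists a, (a < 4)%nat /\ eps a = true.
Hypothesis K_gt0 : 0 < K.
Hypothesis K_coord : forall v a, (a < 4)%nat -> Rabs (v a) <= K * pmax (comb omega v).

Let h := halfper omega eps.

Lemma h_comb : peq h (comb omega (fun a => indb (eps a))).
Proof. intros j _; apply rsum_ext; intros a _; unfold indb; destruct (eps a); ring. Qed.

Definition wcoord (p : nat) : nat -> Z :=
  proj1_sig (constructive_indefinite_description _ (proj1 (proj1 w_enum p))).

Lemma w_comb p : peq (w p) (comb omega (fun a => 2 * IZR (wcoord p a))).
Proof.
  unfold wcoord; destruct (constructive_indefinite_description _ _) as [k Hk]; simpl.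
  intros j Hj; rewrite Hk by auto; apply rsum_ext; intros; ring.
Qed.

Lemma wcoord_nz p : exists a, (a < 4)%nat /\ wcoord p a <> 0%Z.
Proof.
  destruct (Z.eq_dec (wcoord p 0%nat) 0) as [E0|E0]; [| exists 0%nat; split; auto; lia].
  destruct (Z.eq_dec (wcoord p 1%nat) 0) as [E1|E1]; [| exists 1%nat; split; auto; lia].
  destruct (Z.eq_dec (wcoord p 2%nat) 0) as [E2|E2]; [| exists 2%nat; split; auto; lia].
  destruct (Z.eq_dec (wcoord p 3%nat) 0) as [E3|E3]; [| exists 3%nat; split; auto; lia].
  exfalso; apply (proj2 (proj1 w_enum p)); intros j Hj.
  rewrite w_comb by auto; unfold comb; simpl; rewrite E0, E1, E2, E3; unfold pzero; ring.
Qed.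

Lemma wcoord_inj p q : (forall a, (a < 4)%nat -> wcoord p a = wcoord q a) -> p = q.
Proof.
  intros H; apply (proj1 (proj2 w_enum)); intros j Hj; rewrite !w_comb by auto.
  apply rsum_ext; intros a Ha; rewrite H; auto.
Qed.

Definition kap (p : nat) : R := INR (kmax (wcoord p)).

Lemma kap_ge1 p : 1 <= kap p.
Proof. apply (le_INR 1), kmax_ge1, wcoord_nz. Qed.

Lemma kap_le_pmax p (c : nat -> R) : (forall a, (a < 4)%nat -> IZR (Z.abs (wcoord p a)) <= Rabs (c a)) ->
  kap p <= K * pmax (comb omega c).
Proof.
  intros Hc; destruct (kmax_attained (wcoord p)) as [a [Ha Ea]].
  unfold kap; rewrite INR_IZR_INZ, <- Ea; eapply Rle_trans; [apply Hc | apply K_coord]; auto.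
Qed.

Lemma h_far_from_0 : 1 <= K * pmax (psub h pzero).
Proof.
  destruct eps_nz as [a [Ha Ea]]; rewrite psub_pzero, (pmax_peq _ _ h_comb).
  eapply Rle_trans; [| apply (K_coord _ a Ha)]; unfold indb; rewrite Ea, Rabs_R1; lra.
Qed.

Lemma h_far_from_w p : kap p <= K * pmax (psub h (w p)).
Proof.
  rewrite (pmax_peq _ (comb omega (fun a => indb (eps a) - 2 * IZR (wcoord p a)))).
  - apply kap_le_pmax; intros; apply abs_indb_sub_2IZR.
  - intros j Hj; unfold psub; rewrite h_comb, w_comb by auto; unfold comb; simpl; ring.
Qed.

Lemma w_far_from_0 p : kap p <= K * pmax (w p).
Proof.
  rewrite (pmax_peq _ _ (w_comb p)); apply kap_le_pmax; intros a _.
  rewrite Rabs_mult, Rabs_right, Rabs_Zabs by lra.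
  assert (0 <= IZR (Z.abs (wcoord p a))) by (apply IZR_le; lia); lra.
Qed.

Definition r0 : R := / (2 * K).
Definition lam : R := 2 ^ 5 * (8 * K) + 1.
Let xh (t : R) : Para := shift0 h t.

Lemma r0_gt0 : 0 < r0.
Proof. unfold r0; apply Rinv_0_lt_compat; lra. Qed.

Lemma lam_ge1 : 1 <= lam.
Proof. unfold lam; simpl; lra. Qed.

Lemma lam_ge0 : 0 <= lam.
Proof. generalize lam_ge1; lra. Qed.

Lemma far_on_ball v d : 1 <= d -> d <= K * pmax (psub h v) ->
  forall t, Rabs t < r0 -> d / (2 * K) <= pmax (psub (xh t) v).
Proof.
  intros Hd Hv t Ht; unfold xh; rewrite psub_shift0.
  assert (Hsh := pmax_le_shift0 (psub h v) t).
  assert (HKt : K * Rabs t < / 2) by (replace (/ 2) with (K * r0) by (unfold r0; field; lra);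
                                      apply Rmult_lt_compat_l; auto).
  apply (Rmult_le_reg_l (2 * K)); [lra |]; replace (2 * K * (d / (2 * K))) with d by (field; lra).
  nra.
Qed.

Lemma resolvent_lattice_bounded v d : 1 <= d -> d <= K * pmax (psub h v) ->
  bounded_derivs r0 lam 5 (8 * K / d) (resolvent h v).
Proof.
  intros Hd Hv; replace (8 * K / d) with (4 / (d / (2 * K))) by (field; lra).
  apply resolvent_bounded_derivs; [apply r0_gt0 | | apply far_on_ball; auto |].
  - apply Rdiv_lt_0_compat; lra.
  - replace (4 / (d / (2 * K))) with (8 * K / d) by (field; lra).
    assert (8 * K / d <= 8 * K) by (apply Rle_div_l; nra).
    unfold lam; simpl; lra.
Qed.

Lemma cnorm_pinv_w p : cnorm (para (pinv (w p))) <= 4 * K / kap p.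
Proof.
  assert (G := w_far_from_0 p); assert (G1 := kap_ge1 p).
  assert (Hw : kap p / K <= pmax (w p))
    by (apply (Rmult_le_reg_l K); [lra |]; replace (K * (kap p / K)) with (kap p) by (field; lra); lra).
  assert (0 < kap p / K) by (apply Rdiv_lt_0_compat; lra).
  eapply Rle_trans; [apply cnorm_para_pinv; lra |].
  replace (4 * K / kap p) with (4 / (kap p / K)) by (field; lra).
  apply Rmult_le_compat_l; [lra | apply Rinv_le_contravar; auto].
Qed.

Definition ratio_bound (p : nat) : R := (16 * (pmax h + r0) + 4) * K / kap p.

Lemma ratio_bounded p :
  bounded_derivs r0 lam 5 (ratio_bound p) (fun t => clmul (para (xh t)) (para (pinv (w p)))).
Proof.
  assert (G1 := kap_ge1 p); assert (G2 := cnorm_pinv_w p); assert (G3 := lam_ge1).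
  assert (Hh : 0 <= pmax h + r0) by (assert (G := pmax_ge0 h); assert (G' := r0_gt0); lra).
  assert (HKk : 0 <= K / kap p) by (apply Rlt_le, Rdiv_lt_0_compat; lra).
  assert (Hb : 4 * K / kap p <= ratio_bound p) by (unfold ratio_bound, Rdiv in *; nra).
  apply (bounded_derivs_affine r0 lam lam_ge0 5 _ _ (para (pinv (w p)))).
  - intros t Ht; eapply Rle_trans; [apply cnorm_mul |].
    assert (G4 := cnorm_para (xh t)); assert (G5 := cnorm_ge0 (para (pinv (w p)))).
    assert (G6 := pmax_shift0 h t); fold (xh t) in G6.
    apply Rle_trans with ((4 * (pmax h + r0)) * (4 * K / kap p));
      [apply Rmult_le_compat; auto; [apply cnorm_ge0 | lra] | unfold ratio_bound, Rdiv in *; nra].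
  - intros t Ht; apply is_derive_cl_para_shift0_mulr.
  - assert (0 <= ratio_bound p) by lra; nra.
Qed.

Definition zterm_bound (p : nat) : R := 2 ^ 5 * (8 * K / kap p) * (2 ^ 5 * ratio_bound p) ^ 4.

Lemma zterm_bounded p : bounded_derivs r0 lam 5 (zterm_bound p) (fun t => zterm (w p) (xh t)).
Proof.
  assert (G1 := kap_ge1 p); assert (G2 := h_far_from_w p).
  apply (bounded_derivs_ext _ _ 5 _ (fun t => clmul (resolvent h (w p) t)
                                        (clpow (clmul (para (xh t)) (para (pinv (w p)))) 4))).
  - intros t Ht; symmetry; apply zterm_closed_form; apply pnorm2_neq0.
    + assert (G := w_far_from_0 p); nra.
    + assert (G := far_on_ball (w p) (kap p) G1 G2 t Ht).
      assert (0 < kap p / (2 * K)) by (apply Rdiv_lt_0_compat; lra); lra.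
  - apply (bounded_derivs_mul r0 lam r0_gt0); [apply resolvent_lattice_bounded; auto |].
    apply (bounded_derivs_pow r0 lam r0_gt0 lam_ge0), ratio_bounded.
Qed.

Lemma zterm_bound_kap p : zterm_bound p =
  (2 ^ 5 * (8 * K) * (2 ^ 5 * ((16 * (pmax h + r0) + 4) * K)) ^ 4) * (1 / kap p ^ 5).
Proof. assert (G := kap_ge1 p); unfold zterm_bound, ratio_bound; field; lra. Qed.

Lemma ex_series_zterm_bound : ex_series (fun p => zterm_bound p * lam ^ 5).
Proof.
  set (C := 2 ^ 5 * (8 * K) * (2 ^ 5 * ((16 * (pmax h + r0) + 4) * K)) ^ 4).
  assert (HC : 0 <= C * lam ^ 5).
  { assert (G := pmax_ge0 h); assert (G' := r0_gt0); assert (G'' := lam_ge1).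
    apply Rmult_le_pos; [apply Rmult_le_pos; [nra | apply pow_le; nra] | apply pow_le; lra]. }
  apply (ex_series_rsum_bounded _ (C * lam ^ 5 * 16384)).
  - intros p; rewrite zterm_bound_kap; fold C.
    assert (G := kap_ge1 p); assert (0 < kap p ^ 5) by (apply pow_lt; lra).
    assert (0 <= 1 / kap p ^ 5) by (apply Rlt_le, Rdiv_lt_0_compat; lra); nra.
  - intros P; rewrite (rsum_ext _ (fun p => (C * lam ^ 5) * (1 / kap p ^ 5)))
      by (intros; rewrite zterm_bound_kap; fold C; ring).
    rewrite rsum_scal; apply Rmult_le_compat_l; auto.
    apply (sum_inv_kmax_pow5_le wcoord wcoord_nz wcoord_inj P).
Qed.

Definition taylor_part (p : nat) (t : R) : Cl :=
  clsum (fun mu => clmul (clpow (clmul (para (pinv (w p))) (para (xh t))) mu) (para (pinv (w p)))) 4.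

Lemma zterm_split p t : zterm (w p) (xh t) = cladd (resolvent h (w p) t) (taylor_part p t).
Proof. reflexivity. Qed.

Lemma taylor_part_poly p : poly_deg r0 3 (taylor_part p).
Proof.
  set (L := fun t => clmul (para (pinv (w p))) (para (xh t))).
  assert (HL : poly_deg r0 1 L).
  { exists (fun _ => clmul (para (pinv (w p))) clone); split;
      [intros; apply is_derive_cl_para_shift0_mull | apply poly_deg_const]. }
  assert (HLm : forall m, poly_deg r0 m (fun t => clpow (L t) m)).
  { induction m; [exact (poly_deg_const r0 0 clone) |].
    apply (poly_deg_mul r0 (S m) m 1 (fun t => clpow (L t) m) L); auto; lia. }
  apply (poly_deg_sum r0 3 (fun mu t => clmul (clpow (L t) mu) (para (pinv (w p))))); intros m Hm.
  apply (poly_deg_le r0 m 3); [lia |].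
  apply (poly_deg_mul r0 m m 0 (fun t => clpow (L t) m)); auto; [lia | apply poly_deg_const].
Qed.

Definition D4resolvent (A : nat) (v : Para) : R := Derive_n (fun s => resolvent h v s A) 4 0.

(* The Taylor part is a polynomial of degree 3 in x0, so only the resolvent survives. *)
Lemma Derive_4_zterm p A : (A < 8)%nat ->
  Derive_n (fun s => zterm (w p) (xh s) A) 4 0 = D4resolvent A (w p).
Proof.
  intros HA; assert (H0 : Rabs 0 < r0) by (rewrite Rabs_R0; apply r0_gt0).
  assert (Hres := resolvent_lattice_bounded (w p) (kap p) (kap_ge1 p) (h_far_from_w p)).
  destruct (poly_deg_chain r0 3 _ (taylor_part_poly p)) as [E [HE0 [HE HE4]]].
  rewrite (Derive_n_ext _ (fun s => resolvent h (w p) s A + taylor_part p s A))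
    by (intros; rewrite zterm_split; reflexivity).
  rewrite Derive_n_plus.
  - rewrite (Derive_n_cl_chain _ E r0 4 A HE0 HE HA 4 0), HE4 by (auto; lia).
    unfold D4resolvent, clzero; ring.
  - apply (locally_ball0 r0 _ r0_gt0); intros t Ht k Hk.
    apply (bounded_derivs_ex_derive_n r0 lam 5 _ _ A t Hres HA Ht); lia.
  - apply (locally_ball0 r0 _ r0_gt0); intros t Ht k Hk.
    apply (ex_derive_n_cl_chain _ E r0 4 A); auto.
Qed.

Definition zterm_deriv (A p j : nat) (t : R) : R := Derive_n (fun s => zterm (w p) (xh s) A) j t.

Lemma zterm_deriv_chain p A : (A < 8)%nat ->
  (forall j t, (j <= 5)%nat -> Rabs t < r0 -> Rabs (zterm_deriv A p j t) <= zterm_bound p * lam ^ 5) /\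
  (forall j t, (j < 5)%nat -> Rabs t < r0 -> is_derive (zterm_deriv A p j) t (zterm_deriv A p (S j) t)).
Proof.
  intros HA; assert (HS := zterm_bounded p); assert (HM := bounded_derivs_ge0 r0 lam r0_gt0 _ _ _ HS).
  destruct (bounded_derivs_chain r0 lam 5 _ _ HS) as [D [HD0 [HD HDb]]]; split; intros j t Hj Ht;
    unfold zterm_deriv.
  - rewrite (Derive_n_cl_chain _ D r0 5 A HD0 HD HA j t Hj Ht).
    eapply Rle_trans; [apply cnorm_coord; auto |]; eapply Rle_trans; [apply HDb; auto |].
    apply Rmult_le_compat_l, Rle_pow; auto; apply lam_ge1.
  - apply (is_derive_Derive_n_cl_chain (fun t => zterm (w p) (xh t)) D r0 5 A); auto.
Qed.

Lemma zeta4_on_ball A t : (A < 8)%nat -> Rabs t < r0 ->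
  zeta4 w (xh t) A = resolvent h pzero t A + Series (fun p => zterm_deriv A p 0 t).
Proof.
  intros HA Ht; unfold zeta4.
  assert (Hb : forall p, Rabs (zterm_deriv A p 0 t) <= zterm_bound p * lam ^ 5)
    by (intros; apply (proj1 (zterm_deriv_chain p A HA)); auto; lia).
  rewrite (is_lim_seq_unique _ (resolvent h pzero t A + Series (fun p => zterm_deriv A p 0 t)));
    [reflexivity |].
  apply is_lim_seq_incr_1,
    (is_lim_seq_ext (fun N => resolvent h pzero t A + sum_f_R0 (fun p => zterm_deriv A p 0 t) N)).
  - intros N; unfold zpartial, cladd, resolvent.
    rewrite psub_pzero, clsum_coord, rsum_sum_f_R0; reflexivity.
  - apply is_lim_seq_plus'; [apply is_lim_seq_const |].
    apply is_lim_seq_Reals, (Un_cv_Series _ _ Hb ex_series_zterm_bound).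
Qed.

Definition lattice_pt (n : nat) : Para := match n with O => pzero | S p => w p end.

Lemma lattice_pt_inj m m' : peq (lattice_pt m) (lattice_pt m') -> m = m'.
Proof.
  destruct m as [|p], m' as [|q]; simpl; intros H; auto.
  - exfalso; apply (proj2 (proj1 w_enum q)); intros j Hj; symmetry; apply H; auto.
  - exfalso; apply (proj2 (proj1 w_enum p)); intros j Hj; apply H; auto.
  - f_equal; apply (proj1 (proj2 w_enum)); auto.
Qed.

Lemma lattice_pt_onto y : inL omega y -> exists m, peq (lattice_pt m) y.
Proof.
  intros Hy; destruct (classic (peq y pzero)) as [Hz|Hz].
  - exists O; intros j Hj; symmetry; apply Hz; auto.
  - destruct (proj2 (proj2 w_enum) y Hy Hz) as [p Hp]; exists (S p); auto.
Qed.

Lemma inL_lattice_pt n : inL omega (lattice_pt n).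
Proof. destruct n; [apply inL_pzero | apply (proj1 (proj1 w_enum n))]. Qed.

Let reflect_h (v : Para) : Para := fun j => 2 * h j - v j.

Definition reflect_index (n : nat) : nat :=
  proj1_sig (constructive_indefinite_description _
    (lattice_pt_onto _ (inL_reflect_halfper omega eps _ (inL_lattice_pt n)))).

Lemma reflect_index_spec n : peq (lattice_pt (reflect_index n)) (reflect_h (lattice_pt n)).
Proof. unfold reflect_index; destruct (constructive_indefinite_description _ _) as [m Hm]; auto. Qed.

Lemma reflect_index_invol n : reflect_index (reflect_index n) = n.
Proof.
  apply lattice_pt_inj; intros j Hj.
  rewrite (reflect_index_spec _ j Hj); unfold reflect_h; rewrite (reflect_index_spec n j Hj).
  unfold reflect_h; ring.
Qed.

Lemma lattice_pt_bounded n : exists M, bounded_derivs r0 lam 5 M (resolvent h (lattice_pt n)).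
Proof.
  destruct n as [|p].
  - exists (8 * K / 1); apply resolvent_lattice_bounded; [lra | apply h_far_from_0].
  - exists (8 * K / kap p); apply resolvent_lattice_bounded; [apply kap_ge1 | apply h_far_from_w].
Qed.

Lemma D4resolvent_reflect A n : (A < 8)%nat ->
  D4resolvent A (lattice_pt (reflect_index n)) = - D4resolvent A (lattice_pt n).
Proof.
  intros HA; unfold D4resolvent.
  rewrite (Derive_n_ext _ (fun s => - resolvent h (lattice_pt n) (- s) A)).
  - rewrite Derive_n_opp, (Derive_n_comp_opp (fun s => resolvent h (lattice_pt n) s A)), Ropp_0;
      [simpl; ring |].
    rewrite Ropp_0; destruct (lattice_pt_bounded n) as [M HM].
    apply (locally_ball0 r0 _ r0_gt0); intros t Ht k Hk.
    apply (bounded_derivs_ex_derive_n r0 lam 5 M _ A t HM HA Ht); auto.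
  - intros s; rewrite (resolvent_peq _ _ _ _ _ (reflect_index_spec n)); apply resolvent_reflect.
Qed.

Lemma sum_D4resolvent A : (A < 8)%nat -> D4resolvent A pzero + Series (fun p => D4resolvent A (w p)) = 0.
Proof.
  intros HA; pose (a := fun n => D4resolvent A (lattice_pt n)).
  assert (Hab : ex_series (fun n => Rabs (a n))).
  { apply ex_series_incr_1, (ex_series_le (fun p => Rabs (a (S p))) (fun p => zterm_bound p * lam ^ 5));
      [| apply ex_series_zterm_bound].
    intros p; rewrite Rabs_Rabsolu; unfold a; simpl lattice_pt; rewrite <- Derive_4_zterm by auto.
    apply (proj1 (zterm_deriv_chain p A HA) 4%nat 0); [lia | rewrite Rabs_R0; apply r0_gt0]. }
  transitivity (Series a).
  - rewrite (Series_incr_1 a) by (apply ex_series_Rabs; auto); reflexivity.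
  - apply (Series_odd_involution a reflect_index reflect_index_invol); [| exact Hab].
    intros n; exact (D4resolvent_reflect A n HA).
Qed.

Theorem D4_zeta4_half_period A : (A < 8)%nat ->
  let g := fun t => zeta4 w (shift0 h t) A in
  (forall k, (k <= 3)%nat -> locally 0 (fun t => ex_derive_n g k t)) /\ is_derive_n g 4 0 0.
Proof.
  intros HA g; assert (H0 : Rabs 0 < r0) by (rewrite Rabs_R0; apply r0_gt0).
  destruct (bounded_derivs_chain r0 lam 5 _ _ (resolvent_lattice_bounded pzero 1 ltac:(lra) h_far_from_0))
    as [D [HD0 [HD _]]].
  pose (G := fun j t =>
    Derive_n (fun s => resolvent h pzero s A) j t + Series (fun p => zterm_deriv A p j t)).
  assert (Hg : forall t, Rabs t < r0 -> g t = G O t) by (intros t Ht; exact (zeta4_on_ball A t HA Ht)).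
  assert (HG : forall j t, (j < 4)%nat -> Rabs t < r0 -> is_derive (G j) t (G (S j) t)).
  { intros j t Hj Ht; apply (is_derive_plus (Derive_n (fun s => resolvent h pzero s A) j)).
    - apply (is_derive_Derive_n_cl_chain _ D r0 5 A HD0 HD HA); [lia | exact Ht].
    - apply (is_derive_Series r0 (zterm_deriv A) (fun p => zterm_bound p * lam ^ 5) 5 r0_gt0
               ex_series_zterm_bound); [| | lia | exact Ht]; intros p; apply (zterm_deriv_chain p A HA). }
  assert (HG4 : G 4%nat 0 = 0).
  { unfold G; rewrite (Series_ext _ (fun p => D4resolvent A (w p))); [apply (sum_D4resolvent A HA) |].
    intros p; apply (Derive_4_zterm p A HA). }
  split.
  - intros k Hk; apply (locally_ball0 r0 _ r0_gt0); intros t Ht.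
    apply (ex_derive_n_chain g G r0 4 Hg HG); [lia | exact Ht].
  - rewrite <- HG4 at 2; apply (is_derive_n_chain g G r0 4 Hg HG 3 0); [lia | exact H0].
Qed.

End HalfPeriod.

Theorem mainTheorem9 (omega : nat -> Para) (w : nat -> Para) :
  lin_indep4 omega ->
  enumerates_L0 omega w ->
  forall eps : nat -> bool,
    (exists a, (a < 4)%nat /\ eps a = true) ->
    forall A, (A < 8)%nat ->
      let g := fun t => zeta4 w (shift0 (halfper omega eps) t) A in
      (forall k, (k <= 3)%nat -> locally 0 (fun t => ex_derive_n g k t)) /\
      is_derive_n g 4 0 0.
Proof.
  intros Hli Hen eps Heps A HA.
  destruct (lin_indep4_coord_bound omega Hli) as [K [HK HKcoord]].
  exact (D4_zeta4_half_period omega w eps K Hen Heps HK HKcoord A HA).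
Qed.
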